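(* Let $0<r<R$, $\gamma\in\mathbb{R}\setminus\{0\}$, $N\in\mathbb{N}$, $\mu\geqslant1$ an integer, $n\geqslant1$, $\nu_k=k\mu$, and let $H^0,\ldots,H^n$ be the spaces $$H^j=\Bigl\{\theta=\sum_{k=1}^\infty p_k(x^{{\rm i}\gamma})x^k\ \Big|\ p_k\in\mathcal{O}_{\nu_k}(\overline{\mathcal D}\setminus\{0\}),\ \|\theta\|_j=\sum_{k=1}^\infty\bigl\|(k+N+{\rm i}\gamma\delta_t)^jp_k\bigr\|<+\infty\Bigr\}.$$ Then: (i) $H^n\subset\ldots\subset H^1\subset H^0\subset\mathcal{O}(S_1)$, where $S_1$ is any open sector with vertex at the origin, of opening less than $2\pi$ and of radius $1$, such that $S_1\subset\{(-1/\gamma)\ln R<\arg x<(-1/\gamma)\ln r\}$ if $\gamma>0$ and $S_1\subset\{(-1/\gamma)\ln r<\arg x<(-1/\gamma)\ln R\}$ if $\gamma<0$ (meaning every $\theta\in H^0$ converges uniformly on $S_1$ to a holomorphic function); moreover $\|\theta\|_{j-1}\leqslant\|\theta\|_j$ for every $\theta\in H^j$, $j=1,\ldots,n$. (ii) For any $\theta_1,\theta_2\in H^0$ one has $\theta_1\theta_2\in H^0$ and $\|\theta_1\theta_2\|_0\leqslant\|\theta_1\|_0\|\theta_2\|_0$. (iii) For any $\theta\in H^j$ ($j=1,\ldots,n$) one has $\delta\theta\in H^{j-1}$, and the operator $\delta:H^j\to H^{j-1}$ is continuous.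
   Context: $\delta_t=t\,d/dt$ and $\delta=x\,d/dx$; on exotic series $\delta$ acts termwise by $\delta\bigl(p(x^{{\rm i}\gamma})x^k\bigr)=\bigl((k+{\rm i}\gamma\delta_t)p\bigr)(x^{{\rm i}\gamma})x^k$, and the product of exotic series is the formal (Cauchy) product collecting terms by powers of $x$. $x^{{\rm i}\gamma}=e^{{\rm i}\gamma\ln x}$ with a branch of $\ln x$ on the sector, so $|x^{{\rm i}\gamma}|=e^{-\gamma\arg x}$. For an integer $\nu\geqslant1$, $\mathcal{O}_\nu(\overline{\mathcal D}\setminus\{0\})$ denotes the space of functions $f$ holomorphic in $\{0<|t|<R\}$ with pole of order at most $\nu$ at $t=0$, Laurent expansion $f=t^{-\nu}\sum_{k\geqslant0}f_kt^k$, and finite norm $\|f\|=r^{-\nu}\sum_{k\geqslant0}|f_k|R^k$. *)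

From Stdlib Require Import Reals.
From Coquelicot Require Import Coquelicot.
Open Scope R_scope.

Fixpoint Cpow (z : C) (n : nat) : C :=
  match n with O => RtoC 1 | S n' => Cmult z (Cpow z n') end.

Definition Cseries (a : nat -> C) : C :=
  (Series (fun m => fst (a m)), Series (fun m => snd (a m))).

(* The space O_nu(closure D \ {0}).  A function f = t^{-nu} sum_m f_m t^m    *)
(* (holomorphic in 0<|t|<R, pole of order <= nu at 0) is represented by     *)
(* its coefficient sequence (f_m)_m; the norm is                            *)
(*   ||f|| = r^{-nu} sum_m |f_m| R^m.                                        *)

Definition inO (RR : R) (f : nat -> C) : Prop :=
  ex_series (fun m => Cmod (f m) * RR ^ m).

Definition Onorm (r RR : R) (nu : nat) (f : nat -> C) : R :=
  / (r ^ nu) * Series (fun m => Cmod (f m) * RR ^ m).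

Definition Oeval (nu : nat) (f : nat -> C) (t : C) : C :=
  Cmult (Cinv (Cpow t nu)) (Cseries (fun m => Cmult (f m) (Cpow t m))).

(* the operator (a + i gamma delta_t) on O_nu, delta_t = t d/dt:
   delta_t (t^{m-nu}) = (m-nu) t^{m-nu} *)
Definition opT (gamma : R) (nu : nat) (a : R) (f : nat -> C) : nat -> C :=
  fun m => Cmult (RtoC a + Ci * RtoC (gamma * (INR m - INR nu)))%C (f m).

(* Exotic series theta = sum_{k>=1} p_k(x^{i gamma}) x^k are represented by *)
(* theta : nat -> (nat -> C), theta k = coefficients of p_k in O_{k mu};    *)
(* the k = 0 component is required to vanish.                              *)

Definition Hterm (r RR gamma : R) (N mu j : nat) (theta : nat -> nat -> C) (k : nat) : R :=
  Onorm r RR (k * mu) (Nat.iter j (opT gamma (k * mu) (INR (k + N))) (theta k)).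

Definition Hnorm (r RR gamma : R) (N mu j : nat) (theta : nat -> nat -> C) : R :=
  Series (Hterm r RR gamma N mu j theta).

Definition inH (r RR gamma : R) (N mu j : nat) (theta : nat -> nat -> C) : Prop :=
  (forall m, theta 0%nat m = RtoC 0) /\
  (forall k, (1 <= k)%nat -> inO RR (theta k)) /\
  (forall k, (1 <= k)%nat ->
     inO RR (Nat.iter j (opT gamma (k * mu) (INR (k + N))) (theta k))) /\
  ex_series (Hterm r RR gamma N mu j theta).

(* formal (Cauchy) product of exotic series, collecting powers of x:
   (theta1 theta2)_k = sum_{a+b=k} p_a p_b, and p_a p_b in O_{k mu} has
   coefficients the Cauchy product of those of p_a and p_b. *)
Definition Hmul (theta1 theta2 : nat -> nat -> C) : nat -> nat -> C :=
  fun k m => sum_n (fun a => sum_n (fun i =>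
       Cmult (theta1 a i) (theta2 (k - a)%nat (m - i)%nat)) m) k.

(* delta = x d/dx acting termwise:
   delta (p(x^{i gamma}) x^k) = ((k + i gamma delta_t) p)(x^{i gamma}) x^k *)
Definition Hdelta (gamma : R) (mu : nat) (theta : nat -> nat -> C) : nat -> nat -> C :=
  fun k => opT gamma (k * mu) (INR k) (theta k).

Definition Hsub (theta1 theta2 : nat -> nat -> C) : nat -> nat -> C :=
  fun k m => Cminus (theta1 k m) (theta2 k m).

(* Open sector of radius 1 with vertex 0: x = rho e^{i phi}, 0<rho<1,       *)
(* alpha < phi < beta (phi = the chosen branch of arg x on the sector).     *)

Definition polarC (rho phi : R) : C := (rho * cos phi, rho * sin phi).

Definition in_sector (alpha beta : R) (x : C) : Prop :=
  exists rho phi, 0 < rho < 1 /\ alpha < phi < beta /\ x = polarC rho phi.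

(* x^{i gamma} = exp(i gamma ln x), ln x = ln rho + i phi *)
Definition xig (gamma rho phi : R) : C :=
  (exp (- gamma * phi) * cos (gamma * ln rho),
   exp (- gamma * phi) * sin (gamma * ln rho)).

Definition Hpartial (gamma : R) (mu : nat) (theta : nat -> nat -> C)
    (n : nat) (rho phi : R) : C :=
  sum_n (fun k => Cmult (Oeval (k * mu) (theta k) (xig gamma rho phi))
                        (Cpow (polarC rho phi) k)) n.

From Pilot Require Import Defs.
From Stdlib Require Import Reals Lra Lia Psatz ClassicalEpsilon FunctionalExtensionality.
From Coquelicot Require Import Coquelicot.
Open Scope R_scope.

(* Everything is an estimate on the Laurent coefficients [theta k m] of the [p_k].
   The operator [a + i gamma delta_t] multiplies the coefficient of [t^(m - k mu)] by
   [a + i gamma (m - k mu)], of modulus at least [a].  With [a = k + N >= 1] this makes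
   the norms [||.||_j] nondecreasing in [j]; since [delta] acts on [p_k] as the same
   operator with the smaller [a = k], [||delta theta||_(j-1) <= ||theta||_j].
   The norm [||.||_0] is a weighted l1 norm with weights [r^(-k mu) R^m], multiplicative
   in [(k, m)], hence submultiplicative for the Cauchy product.  Finally, in the
   logarithmic coordinate [x = exp w] the term [(k, m)] is
   [theta k m exp ((k + i gamma (m - k mu)) w)]; on the sector these exponentials are
   bounded by the weights, so the double series converges uniformly to a function
   holomorphic in [w] (Weierstrass), hence in [x] since [exp] is locally invertible. *)

(** * Complex analysis *)

Lemma is_derive_eps {K : AbsRing} {V : NormedModule K} (f : K -> V) x l :
  is_derive f x l <-> forall eps, 0 < eps -> exists d, 0 < d /\ forall y, norm (minus y x) < d ->
    norm (minus (minus (f y) (f x)) (scal (minus y x) l)) <= eps * norm (minus y x).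
Proof.
  split.
  - intros [_ H] eps Heps.
    specialize (H x (fun P HP => HP) (mkposreal eps Heps)).
    apply (locally_le_locally_norm (K:=K) (V:=AbsRing_NormedModule K)) in H.
    destruct H as [d Hd].
    exists d. split; [apply cond_pos|]. intros y Hy. apply (Hd y Hy).
  - intros H. split; [apply is_linear_scal_l|].
    intros x' Hx'.
    apply (is_filter_lim_locally_unique (K:=K) (V:=AbsRing_NormedModule K)) in Hx'. subst x'.
    intros eps. apply (locally_norm_le_locally (K:=K) (V:=AbsRing_NormedModule K)).
    destruct (H eps (cond_pos eps)) as [d [Hd H']]. exists (mkposreal d Hd). exact H'.
Qed.

Lemma C_is_derive_eps (f : C -> C) x l :
  is_derive (K:=C_AbsRing) (V:=C_NormedModule) f x l <->
  forall eps, 0 < eps -> exists d, 0 < d /\ forall y, Cmod (y - x) < d ->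
    Cmod (f y - f x - (y - x) * l) <= eps * Cmod (y - x).
Proof. apply (is_derive_eps (K:=C_AbsRing) (V:=C_NormedModule)). Qed.

Lemma R_is_derive_eps (f : R -> R) x l :
  is_derive f x l <->
  forall eps, 0 < eps -> exists d, 0 < d /\ forall y, Rabs (y - x) < d ->
    Rabs (f y - f x - (y - x) * l) <= eps * Rabs (y - x).
Proof. apply (is_derive_eps (K:=R_AbsRing) (V:=R_NormedModule)). Qed.

Lemma derivable_pt_lim_eps (f : R -> R) x l : derivable_pt_lim f x l ->
  forall eps, 0 < eps -> exists d, 0 < d /\
    forall h, Rabs h < d -> Rabs (f (x + h) - f x - h * l) <= eps * Rabs h.
Proof.
  intros H eps Heps. apply is_derive_Reals in H. rewrite R_is_derive_eps in H.
  destruct (H eps Heps) as [d [Hd H']]. exists d; split; auto.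
  intros h Hh. specialize (H' (x + h)). replace (x + h - x) with h in H' by ring. auto.
Qed.

Lemma im_le_Cmod (z : C) : Rabs (snd z) <= Cmod z.
Proof.
  destruct z as [a b]. unfold Cmod; simpl.
  rewrite <- sqrt_Rsqr_abs. apply sqrt_le_1_alt. unfold Rsqr. nra.
Qed.

Lemma Cmod_le_abs_re_im (z : C) : Cmod z <= Rabs (fst z) + Rabs (snd z).
Proof.
  destruct z as [a b]. unfold Cmod; simpl.
  pose proof (Rabs_pos a); pose proof (Rabs_pos b).
  rewrite <- (sqrt_Rsqr (Rabs a + Rabs b)) by lra.
  apply sqrt_le_1_alt. unfold Rsqr.
  assert (a * a = Rabs a * Rabs a) by (rewrite <- Rabs_mult; symmetry; apply Rabs_right; nra).
  assert (b * b = Rabs b * Rabs b) by (rewrite <- Rabs_mult; symmetry; apply Rabs_right; nra).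
  nra.
Qed.

Definition Cexp (w : C) : C := (exp (fst w) * cos (snd w), exp (fst w) * sin (snd w)).

Lemma Cexp_plus a b : Cexp (a + b)%C = (Cexp a * Cexp b)%C.
Proof.
  destruct a as [a1 a2], b as [b1 b2]. unfold Cexp, Cmult, Cplus; simpl.
  rewrite exp_plus, cos_plus, sin_plus. apply injective_projections; simpl; ring.
Qed.

Lemma Cexp_0 : Cexp 0 = 1%C.
Proof.
  unfold Cexp; simpl. rewrite exp_0, cos_0, sin_0.
  apply injective_projections; simpl; ring.
Qed.

Lemma Cmod_Cexp w : Cmod (Cexp w) = exp (fst w).
Proof.
  destruct w as [a b]; unfold Cmod, Cexp; cbn [fst snd].
  replace ((exp a * cos b) ^ 2 + (exp a * sin b) ^ 2) with (Rsqr (exp a)).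
  - apply sqrt_Rsqr. left; apply exp_pos.
  - unfold Rsqr. pose proof (sin2_cos2 b) as Hsc. unfold Rsqr in Hsc. nra.
Qed.

Lemma Cexp_neq0 w : Cexp w <> 0%C.
Proof.
  intro H. pose proof (Cmod_Cexp w) as Hm. rewrite H, Cmod_0 in Hm.
  pose proof (exp_pos (fst w)). lra.
Qed.

Lemma Cexp_opp w : Cexp (- w)%C = Cinv (Cexp w).
Proof.
  assert (H : (Cexp (- w) * Cexp w)%C = 1%C).
  { rewrite <- Cexp_plus. replace (- w + w)%C with (RtoC 0) by ring. apply Cexp_0. }
  pose proof (Cexp_neq0 w).
  replace (Cexp (- w)) with (Cexp (- w) * Cexp w * / Cexp w)%C by (field; auto).
  rewrite H. ring.
Qed.

Lemma Cpow_Cexp u n : Defs.Cpow (Cexp u) n = Cexp (RtoC (INR n) * u)%C.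
Proof.
  induction n as [|n IH]; simpl Defs.Cpow.
  - replace (RtoC (INR 0) * u)%C with (RtoC 0) by (simpl; ring). now rewrite Cexp_0.
  - rewrite IH, <- Cexp_plus. f_equal. rewrite S_INR, RtoC_plus. ring.
Qed.

Lemma exp_cos_sin_taylor1 e : 0 < e -> exists d, 0 < d /\
  forall a b, Rabs a < d -> Rabs b < d ->
  Rabs (exp a - 1 - a) <= e * Rabs a /\ Rabs (cos b - 1) <= e * Rabs b /\
  Rabs (sin b - b) <= e * Rabs b.
Proof.
  intros He.
  destruct (derivable_pt_lim_eps exp 0 1) with (eps := e) as [d1 [Hd1 H1]]; [|lra|].
  { pose proof (derivable_pt_lim_exp 0) as D. now rewrite exp_0 in D. }
  destruct (derivable_pt_lim_eps cos 0 0) with (eps := e) as [d2 [Hd2 H2]]; [|lra|].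
  { pose proof (derivable_pt_lim_cos 0) as D. now rewrite sin_0, Ropp_0 in D. }
  destruct (derivable_pt_lim_eps sin 0 1) with (eps := e) as [d3 [Hd3 H3]]; [|lra|].
  { pose proof (derivable_pt_lim_sin 0) as D. now rewrite cos_0 in D. }
  exists (Rmin d1 (Rmin d2 d3)). split; [repeat apply Rmin_pos; lra|].
  intros a b Ha Hb.
  pose proof (Rmin_l d1 (Rmin d2 d3)); pose proof (Rmin_r d1 (Rmin d2 d3)).
  pose proof (Rmin_l d2 d3); pose proof (Rmin_r d2 d3).
  specialize (H1 a ltac:(lra)). specialize (H2 b ltac:(lra)). specialize (H3 b ltac:(lra)).
  rewrite Rplus_0_l, exp_0, Rmult_1_r in H1. rewrite Rplus_0_l, cos_0, Rmult_0_r in H2.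
  rewrite Rplus_0_l, sin_0, Rmult_1_r in H3.
  replace (cos b - 1) with (cos b - 1 - 0) by ring. replace (sin b - b) with (sin b - 0 - b) by ring.
  auto.
Qed.

Lemma Cexp_taylor1 : forall eps, 0 < eps -> exists d, 0 < d /\
  forall h, Cmod h < d -> Cmod (Cexp h - 1 - h)%C <= eps * Cmod h.
Proof.
  intros eps Heps.
  set (e := Rmin eps 1 / 8).
  assert (He : 0 < e) by (unfold e; apply Rdiv_lt_0_compat; [apply Rmin_pos|]; lra).
  assert (He1 : e <= 1 / 8) by (unfold e; pose proof (Rmin_r eps 1); lra).
  assert (He2 : 8 * e <= eps) by (unfold e; pose proof (Rmin_l eps 1); lra).
  destruct (exp_cos_sin_taylor1 e He) as [d0 [Hd0 Htay]].
  exists (Rmin d0 e). split; [apply Rmin_pos; lra|].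
  intros [a b] Hh. pose proof (Rmin_l d0 e); pose proof (Rmin_r d0 e).
  pose proof (re_le_Cmod (a, b)) as Ha; pose proof (im_le_Cmod (a, b)) as Hb. simpl in Ha, Hb.
  set (ch := Cmod (a, b)) in *.
  destruct (Htay a b ltac:(lra) ltac:(lra)) as [H1 [H2 H3]].
  eapply Rle_trans; [apply Cmod_le_abs_re_im|]. unfold Cexp; simpl.
  set (ea := exp a) in *. set (cb := cos b) in *. set (sb := sin b) in *.
  pose proof (Rabs_pos a); pose proof (Rabs_pos b).
  assert (Hc : Rabs cb <= 1) by (apply Rabs_le; split; apply COS_bound).
  assert (Hs : Rabs sb <= 2 * Rabs b).
  { replace sb with ((sb - b) + b) by ring. eapply Rle_trans; [apply Rabs_triang|]. nra. }
  assert (Hea : Rabs (ea - 1) <= 2 * Rabs a).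
  { replace (ea - 1) with ((ea - 1 - a) + a) by ring. eapply Rle_trans; [apply Rabs_triang|]. nra. }
  assert (H1a : Rabs (1 + a) <= 2).
  { eapply Rle_trans; [apply Rabs_triang|]. rewrite Rabs_R1. lra. }
  assert (Hre : Rabs (ea * cb - 1 - a) <= e * Rabs a + 2 * (e * Rabs b)).
  { replace (ea * cb - 1 - a) with ((ea - 1 - a) * cb + (1 + a) * (cb - 1)) by ring.
    eapply Rle_trans; [apply Rabs_triang|]. rewrite !Rabs_mult.
    pose proof (Rabs_pos (ea - 1 - a)); pose proof (Rabs_pos (cb - 1)); pose proof (Rabs_pos cb).
    nra. }
  assert (Him : Rabs (ea * sb - b) <= 2 * Rabs a * (2 * Rabs b) + e * Rabs b).
  { replace (ea * sb - b) with ((ea - 1) * sb + (sb - b)) by ring.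
    eapply Rle_trans; [apply Rabs_triang|]. rewrite !Rabs_mult.
    pose proof (Rabs_pos (ea - 1)); pose proof (Rabs_pos sb). nra. }
  assert (Rabs a * Rabs b <= e * ch) by nra.
  replace (ea * cb + - (1) + - a) with (ea * cb - 1 - a) by ring.
  replace (ea * sb + - 0 + - b) with (ea * sb - b) by ring. nra.
Qed.

Lemma is_derive_Cexp_linear (c lam w : C) :
  is_derive (K:=C_AbsRing) (V:=C_NormedModule) (fun z => c * Cexp (lam * z))%C w
    (c * lam * Cexp (lam * w))%C.
Proof.
  apply C_is_derive_eps. intros eps Heps.
  set (A := Cmod c * Cmod (Cexp (lam * w))).
  assert (HA : 0 <= A) by (apply Rmult_le_pos; apply Cmod_ge_0).
  pose proof (Cmod_ge_0 lam) as Hlam.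
  set (u := A * Cmod lam).
  assert (Hu : 0 <= u) by (apply Rmult_le_pos; auto).
  destruct (Cexp_taylor1 (eps / (u + 1))) as [d [Hd Htay]]; [apply Rdiv_lt_0_compat; lra|].
  exists (d / (Cmod lam + 1)). split; [apply Rdiv_lt_0_compat; lra|].
  intros y Hy.
  replace (c * Cexp (lam * y) - c * Cexp (lam * w) - (y - w) * (c * lam * Cexp (lam * w)))%C
    with (c * Cexp (lam * w) * (Cexp (lam * (y - w)) - 1 - lam * (y - w)))%C.
  2: { replace (lam * y)%C with (lam * w + lam * (y - w))%C by ring. rewrite Cexp_plus. ring. }
  pose proof (Cmod_ge_0 (y - w)) as Hyw.
  assert (Hl : Cmod (lam * (y - w)) < d).
  { rewrite Cmod_mult.
    apply (Rmult_lt_compat_r (Cmod lam + 1)) in Hy; [|lra].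
    unfold Rdiv in Hy. rewrite Rmult_assoc, Rinv_l, Rmult_1_r in Hy by lra. nra. }
  specialize (Htay _ Hl). rewrite Cmod_mult in Htay.
  rewrite !Cmod_mult. fold A.
  apply Rle_trans with (A * (eps / (u + 1) * (Cmod lam * Cmod (y - w)))).
  { apply Rmult_le_compat_l; auto. }
  replace (A * (eps / (u + 1) * (Cmod lam * Cmod (y - w))))
    with (eps * Cmod (y - w) * (u / (u + 1))) by (unfold u in *; field; lra).
  assert (u / (u + 1) <= 1).
  { apply Rmult_le_reg_r with (u + 1); [lra|].
    unfold Rdiv. rewrite Rmult_assoc, Rinv_l by lra. lra. }
  rewrite <- (Rmult_1_r (eps * Cmod (y - w))) at 2.
  apply Rmult_le_compat_l; [apply Rmult_le_pos|]; lra.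
Qed.

Lemma filterlim_C_eps (u : nat -> C) l : filterlim u eventually (locally l) <->
  forall eps, 0 < eps -> exists N, forall n, (N <= n)%nat -> Cmod (u n - l)%C < eps.
Proof.
  split.
  - intros H eps Heps. assert (He2 : 0 < eps / 2) by lra.
    destruct (proj1 (filterlim_locally (F := eventually) u l) H (mkposreal _ He2)) as [N HN].
    exists N. intros n Hn. destruct (HN n Hn) as [H1 H2]. simpl in H1, H2.
    eapply Rle_lt_trans; [apply Cmod_le_abs_re_im|].
    change (Rabs (fst (u n) + - fst l) < eps / 2) in H1.
    change (Rabs (snd (u n) + - snd l) < eps / 2) in H2. simpl. lra.
  - intros H. apply (proj2 (filterlim_locally (F := eventually) u l)). intros eps.
    destruct (H eps (cond_pos eps)) as [N HN]. exists N. intros n Hn. specialize (HN n Hn).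
    pose proof (re_le_Cmod (u n - l)%C). pose proof (im_le_Cmod (u n - l)%C).
    split.
    + change (Rabs (fst (u n) + - fst l) < eps). simpl in *. lra.
    + change (Rabs (snd (u n) + - snd l) < eps). simpl in *. lra.
Qed.

Lemma filterlim_R_eps (u : nat -> R) l : filterlim u eventually (locally l) <->
  forall eps, 0 < eps -> exists N, forall n, (N <= n)%nat -> Rabs (u n - l) < eps.
Proof.
  split.
  - intros H eps Heps.
    destruct (proj1 (filterlim_locally (F := eventually) u l) H (mkposreal _ Heps)) as [N HN].
    exists N. intros n Hn. apply (HN n Hn).
  - intros H. apply (proj2 (filterlim_locally (F := eventually) u l)). intros eps.
    destruct (H eps (cond_pos eps)) as [N HN]. exists N. intros n Hn. apply (HN n Hn).
Qed.

Lemma sum_n_fst (a : nat -> C) n : fst (sum_n a n) = sum_n (fun k => fst (a k)) n.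
Proof.
  induction n as [|n IH]; [now rewrite !sum_O|]. rewrite !sum_Sn.
  change (fst (sum_n a n) + fst (a (S n)) = sum_n (fun k => fst (a k)) n + fst (a (S n))).
  now rewrite IH.
Qed.

Lemma sum_n_snd (a : nat -> C) n : snd (sum_n a n) = sum_n (fun k => snd (a k)) n.
Proof.
  induction n as [|n IH]; [now rewrite !sum_O|]. rewrite !sum_Sn.
  change (snd (sum_n a n) + snd (a (S n)) = sum_n (fun k => snd (a k)) n + snd (a (S n))).
  now rewrite IH.
Qed.

Lemma sum_n_le (a b : nat -> R) n : (forall k, (k <= n)%nat -> a k <= b k) ->
  sum_n a n <= sum_n b n.
Proof.
  intros H. induction n as [|n IH]; [rewrite !sum_O; auto|]. rewrite !sum_Sn.
  change (sum_n a n + a (S n) <= sum_n b n + b (S n)).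
  assert (sum_n a n <= sum_n b n) by (apply IH; auto).
  specialize (H (S n) (le_n _)). lra.
Qed.

Lemma sum_n_Rmult_l (c : R) (a : nat -> R) n : sum_n (fun k => c * a k) n = c * sum_n a n.
Proof. exact (sum_n_scal_l c a n). Qed.

Lemma Cmod_sum_n (a : nat -> C) n : Cmod (sum_n a n) <= sum_n (fun k => Cmod (a k)) n.
Proof.
  induction n as [|n IH]; [rewrite !sum_O; lra|]. rewrite !sum_Sn.
  change (Cmod (sum_n a n + a (S n))%C <= sum_n (fun k => Cmod (a k)) n + Cmod (a (S n))).
  eapply Rle_trans; [apply Cmod_triangle|]. lra.
Qed.

Lemma is_series_Cseries (a : nat -> C) : ex_series (fun n => Cmod (a n)) ->
  is_series (K:=C_AbsRing) (V:=C_NormedModule) a (Cseries a).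
Proof.
  intros H.
  assert (Hpart : forall p : C -> R, (forall z, Rabs (p z) <= Cmod z) ->
    is_series (fun n => p (a n)) (Series (fun n => p (a n)))).
  { intros p Hp. apply Series_correct, ex_series_Rabs.
    apply (ex_series_le (K:=R_AbsRing) (V:=R_CompleteNormedModule) _ (fun n => Cmod (a n))); [|exact H].
    intros n. change (Rabs (Rabs (p (a n))) <= Cmod (a n)). rewrite Rabs_Rabsolu. auto. }
  pose proof (Hpart fst re_le_Cmod) as H1. pose proof (Hpart snd im_le_Cmod) as H2.
  apply filterlim_C_eps. intros eps Heps.
  destruct (proj1 (filterlim_R_eps _ _) H1 (eps / 2) ltac:(lra)) as [N1 HN1].
  destruct (proj1 (filterlim_R_eps _ _) H2 (eps / 2) ltac:(lra)) as [N2 HN2].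
  exists (max N1 N2). intros n Hn.
  specialize (HN1 n ltac:(lia)). specialize (HN2 n ltac:(lia)).
  eapply Rle_lt_trans; [apply Cmod_le_abs_re_im|].
  unfold Cseries, Cminus, Cplus, Copp. cbn beta. cbn [fst snd]. rewrite sum_n_fst, sum_n_snd.
  replace eps with (eps / 2 + eps / 2) by field. apply Rplus_lt_compat; [exact HN1 | exact HN2].
Qed.

Lemma Cseries_unique (a : nat -> C) l :
  is_series (K:=C_AbsRing) (V:=C_NormedModule) a l ->
  ex_series (fun n => Cmod (a n)) -> Cseries a = l.
Proof.
  intros Hl Ha. exact (filterlim_locally_unique _ _ _ (is_series_Cseries a Ha) Hl).
Qed.

Lemma is_series_Cmod_le (a : nat -> C) l (b : nat -> R) lb :
  is_series (K:=C_AbsRing) (V:=C_NormedModule) a l -> (forall n, Cmod (a n) <= b n) ->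
  is_series b lb -> Cmod l <= lb.
Proof.
  unfold is_series. rewrite filterlim_C_eps, filterlim_R_eps. intros H1 Hb H2.
  apply Rnot_lt_le. intros Hlt.
  set (eps := (Cmod l - lb) / 2). assert (Heps : 0 < eps) by (unfold eps; lra).
  destruct (H1 eps Heps) as [N1 HN1]. destruct (H2 eps Heps) as [N2 HN2].
  set (n := max N1 N2).
  assert (A1 : Cmod (sum_n a n - l) < eps) by (apply HN1; lia).
  assert (A2 : Rabs (sum_n b n - lb) < eps) by (apply HN2; lia).
  pose proof (Cmod_sum_n a n). pose proof (sum_n_le _ _ n (fun k _ => Hb k)).
  assert (Cmod l <= Cmod (sum_n a n) + Cmod (sum_n a n - l)).
  { replace l with (sum_n a n - (sum_n a n - l))%C at 1 by ring. unfold Cminus at 1.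
    eapply Rle_trans; [apply Cmod_triangle|]. rewrite Cmod_opp. lra. }
  apply Rabs_def2 in A2. unfold eps in *. lra.
Qed.

Lemma Cseries_dominated (a : nat -> C) (b : nat -> R) :
  (forall n, Cmod (a n) <= b n) -> ex_series b ->
  is_series (K:=C_AbsRing) (V:=C_NormedModule) a (Cseries a) /\ Cmod (Cseries a) <= Series b.
Proof.
  intros H Hb.
  assert (Ha : is_series (K:=C_AbsRing) (V:=C_NormedModule) a (Cseries a)).
  { apply is_series_Cseries.
    apply (ex_series_le (K:=R_AbsRing) (V:=R_CompleteNormedModule) _ b); auto.
    intros n. change (Rabs (Cmod (a n)) <= b n). rewrite Rabs_right; auto.
    apply Rle_ge, Cmod_ge_0. }
  split; auto. apply (is_series_Cmod_le a _ b); auto. now apply Series_correct.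
Qed.

Lemma Cseries_tail_le (a : nat -> C) (L : C) (b : nat -> R) (lb : R) n :
  is_series (K:=C_AbsRing) (V:=C_NormedModule) a L -> (forall k, Cmod (a k) <= b k) ->
  is_series b lb -> Cmod (L - sum_n a n) <= lb - sum_n b n.
Proof.
  intros Ha Hb Hlb.
  assert (Ta : is_series (K:=C_AbsRing) (V:=C_NormedModule)
                 (fun k => a (S n + k)%nat) (L - sum_n a n)%C).
  { apply (is_series_incr_n a (S n)); [lia|]. simpl pred.
    match goal with |- is_series _ ?x => replace x with L; [exact Ha|] end.
    change (L = (L - sum_n a n + sum_n a n)%C). ring. }
  assert (Tb : is_series (fun k => b (S n + k)%nat) (lb - sum_n b n)).
  { apply (is_series_incr_n b (S n)); [lia|]. simpl pred.
    match goal with |- is_series _ ?x => replace x with lb; [exact Hlb|] end.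
    change (lb = lb - sum_n b n + sum_n b n). ring. }
  exact (is_series_Cmod_le _ _ _ _ Ta (fun k => Hb (S n + k)%nat) Tb).
Qed.

Lemma is_derive_along_segment (g g' : C -> C) (pr : C -> R) w0 h s :
  (forall z, Rabs (pr z) <= Cmod z) ->
  (forall a b c (t : R), pr (a - b - RtoC t * c)%C = pr a - pr b - t * pr c) ->
  is_derive (K:=C_AbsRing) (V:=C_NormedModule) g (w0 + RtoC s * h)%C (g' (w0 + RtoC s * h)%C) ->
  is_derive (fun t : R => pr (g (w0 + RtoC t * h)%C)) s (pr (h * g' (w0 + RtoC s * h))%C).
Proof.
  intros Hpr Hlin Hd. rewrite C_is_derive_eps in Hd. apply R_is_derive_eps. intros eps Heps.
  pose proof (Cmod_ge_0 h).
  destruct (Hd (eps / (Cmod h + 1))) as [d [Hd0 Hd1]]; [apply Rdiv_lt_0_compat; lra|].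
  exists (d / (Cmod h + 1)). split; [apply Rdiv_lt_0_compat; lra|].
  intros t Ht.
  set (p := (w0 + RtoC s * h)%C) in *.
  assert (Hy : ((w0 + RtoC t * h) - p = RtoC (t - s) * h)%C)
    by (unfold p; rewrite RtoC_minus; ring).
  specialize (Hd1 (w0 + RtoC t * h)%C). rewrite Hy, Cmod_mult, Cmod_R in Hd1.
  pose proof (Rabs_pos (t - s)).
  assert (Hlt : Rabs (t - s) * Cmod h < d).
  { apply (Rmult_lt_compat_r (Cmod h + 1)) in Ht; [|lra].
    unfold Rdiv in Ht. rewrite Rmult_assoc, Rinv_l, Rmult_1_r in Ht by lra. nra. }
  specialize (Hd1 Hlt).
  rewrite <- Hlin.
  replace (RtoC (t - s) * (h * g' p))%C with (RtoC (t - s) * h * g' p)%C by ring.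
  eapply Rle_trans; [apply Hpr|]. eapply Rle_trans; [apply Hd1|].
  replace (eps / (Cmod h + 1) * (Rabs (t - s) * Cmod h))
    with (eps * Rabs (t - s) * (Cmod h / (Cmod h + 1))) by (field; lra).
  assert (Cmod h / (Cmod h + 1) <= 1).
  { apply Rmult_le_reg_r with (Cmod h + 1); [lra|].
    unfold Rdiv. rewrite Rmult_assoc, Rinv_l by lra. lra. }
  rewrite <- (Rmult_1_r (eps * Rabs (t - s))) at 2.
  apply Rmult_le_compat_l; [apply Rmult_le_pos|]; lra.
Qed.

Lemma MVT_C_component (g g' : C -> C) (pr : C -> R) w0 d M :
  (forall z, Rabs (pr z) <= Cmod z) ->
  (forall a b c (t : R), pr (a - b - RtoC t * c)%C = pr a - pr b - t * pr c) ->
  (forall y, Cmod (y - w0) < d ->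
     is_derive (K:=C_AbsRing) (V:=C_NormedModule) g y (g' y) /\ Cmod (g' y) <= M) ->
  forall h, Cmod h < d -> Rabs (pr (g (w0 + h)%C) - pr (g w0)) <= M * Cmod h.
Proof.
  intros Hpr Hlin H h Hh.
  assert (Hin : forall x, 0 <= x <= 1 -> Cmod ((w0 + RtoC x * h) - w0) < d).
  { intros x Hx. replace ((w0 + RtoC x * h) - w0)%C with (RtoC x * h)%C by ring.
    rewrite Cmod_mult, Cmod_R, Rabs_right by lra. pose proof (Cmod_ge_0 h). nra. }
  destruct (MVT_gen (fun t : R => pr (g (w0 + RtoC t * h)%C)) 0 1
              (fun t => pr (h * g' (w0 + RtoC t * h))%C)) as [c [Hc Heq]].
  - intros x Hx. rewrite Rmin_left, Rmax_right in Hx by lra.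
    apply is_derive_along_segment; auto. apply H, Hin. lra.
  - intros x Hx. rewrite Rmin_left, Rmax_right in Hx by lra.
    apply continuity_pt_filterlim, (ex_derive_continuous (K:=R_AbsRing) (V:=R_NormedModule)).
    eexists. apply is_derive_along_segment; auto. apply H, Hin. lra.
  - rewrite Rmin_left, Rmax_right in Hc by lra.
    replace (w0 + RtoC 1 * h)%C with (w0 + h)%C in Heq by ring.
    replace (w0 + RtoC 0 * h)%C with w0 in Heq by ring.
    rewrite Heq, Rminus_0_r, Rmult_1_r.
    eapply Rle_trans; [apply Hpr|]. rewrite Cmod_mult.
    destruct (H _ (Hin c Hc)) as [_ HM]. pose proof (Cmod_ge_0 h).
    rewrite Rmult_comm. apply Rmult_le_compat_r; auto.
Qed.

Lemma MVT_C_bound (g g' : C -> C) w0 d M :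
  (forall y, Cmod (y - w0) < d ->
     is_derive (K:=C_AbsRing) (V:=C_NormedModule) g y (g' y) /\ Cmod (g' y) <= M) ->
  forall h, Cmod h < d -> Cmod (g (w0 + h)%C - g w0) <= 2 * M * Cmod h.
Proof.
  intros H h Hh.
  pose proof (MVT_C_component g g' fst w0 d M re_le_Cmod
                ltac:(intros; simpl; ring) H h Hh).
  pose proof (MVT_C_component g g' snd w0 d M im_le_Cmod
                ltac:(intros; simpl; ring) H h Hh).
  eapply Rle_trans; [apply Cmod_le_abs_re_im|]. simpl. unfold Rminus in *. lra.
Qed.

Lemma Cmod_linearization_le (g g' : C -> C) w0 d M :
  (forall y, Cmod (y - w0) < d ->
     is_derive (K:=C_AbsRing) (V:=C_NormedModule) g y (g' y) /\ Cmod (g' y) <= M) ->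
  forall h, Cmod h < d -> Cmod (g (w0 + h) - g w0 - h * g' w0)%C <= 3 * Cmod h * M.
Proof.
  intros Hg h Hh.
  pose proof (MVT_C_bound g g' w0 d M Hg h Hh).
  assert (Hw0 : Cmod (w0 - w0) < d)
    by (replace (w0 - w0)%C with (RtoC 0) by ring; rewrite Cmod_0; pose proof (Cmod_ge_0 h); lra).
  destruct (Hg w0 Hw0) as [_ HM0]. pose proof (Cmod_ge_0 h).
  unfold Cminus at 1. eapply Rle_trans; [apply Cmod_triangle|].
  rewrite Cmod_opp, Cmod_mult. nra.
Qed.

Lemma is_derive_uniform_finite (g g' : nat -> C -> C) w0 e K : 0 < e ->
  (forall n, (n < K)%nat -> is_derive (K:=C_AbsRing) (V:=C_NormedModule) (g n) w0 (g' n w0)) ->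
  exists d, 0 < d /\ forall n, (n < K)%nat -> forall h, Cmod h < d ->
    Cmod (g n (w0 + h) - g n w0 - h * g' n w0)%C <= e * Cmod h.
Proof.
  intros He. induction K as [|K IH]; intros Hg.
  - exists 1. split; [lra|]. intros n Hn. lia.
  - destruct IH as [d1 [Hd1 H1]]; [intros n Hn; apply Hg; lia|].
    pose proof (Hg K (Nat.lt_succ_diag_r K)) as HK. rewrite C_is_derive_eps in HK.
    destruct (HK e He) as [d2 [Hd2 H2]].
    exists (Rmin d1 d2). split; [apply Rmin_pos; auto|].
    intros n Hn h Hh. pose proof (Rmin_l d1 d2); pose proof (Rmin_r d1 d2).
    destruct (Nat.eq_dec n K) as [->|Hne].
    + specialize (H2 (w0 + h)%C). replace (w0 + h - w0)%C with h in H2 by ring. apply H2. lra.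
    + apply H1; [lia|lra].
Qed.

(* The mean value bound turns the domination of the derivatives by a summable [M]
   into uniform control of the tails of the difference quotients. *)
Lemma is_derive_series (g g' : nat -> C -> C) (G : C -> C) (M : nat -> R) w0 d D :
  0 < d ->
  (forall n y, Cmod (y - w0) < d ->
     is_derive (K:=C_AbsRing) (V:=C_NormedModule) (g n) y (g' n y) /\ Cmod (g' n y) <= M n) ->
  ex_series M ->
  (forall y, Cmod (y - w0) < d -> is_series (K:=C_AbsRing) (V:=C_NormedModule) (fun n => g n y) (G y)) ->
  is_series (K:=C_AbsRing) (V:=C_NormedModule) (fun n => g' n w0) D ->
  is_derive (K:=C_AbsRing) (V:=C_NormedModule) G w0 D.
Proof.
  intros Hd Hg HM HG HD. apply C_is_derive_eps. intros eps Heps.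
  pose proof (Series_correct _ HM) as HSM. set (SM := Series M) in *.
  destruct (proj1 (filterlim_R_eps _ _) HSM (eps / 16) ltac:(lra)) as [N0 HN0].
  assert (Htail : SM - sum_n M N0 < eps / 16).
  { assert (Rabs (sum_n M N0 - SM) < eps / 16) as Hc by exact (HN0 N0 (le_n _)).
    apply Rabs_def2 in Hc. lra. }
  assert (HK : 0 < INR (S N0)) by (apply lt_0_INR; lia).
  set (e' := eps / (2 * INR (S N0))).
  assert (He' : 0 < e') by (unfold e'; apply Rdiv_lt_0_compat; lra).
  assert (Hw0 : Cmod (w0 - w0) < d) by (replace (w0 - w0)%C with (RtoC 0) by ring; rewrite Cmod_0; lra).
  destruct (is_derive_uniform_finite g g' w0 e' (S N0) He') as [d0 [Hd0 H0]].
  { intros n _. apply (Hg n w0 Hw0). }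
  exists (Rmin d d0). split; [apply Rmin_pos; auto|].
  intros y Hy. set (h := (y - w0)%C) in *.
  replace y with (w0 + h)%C by (unfold h; ring).
  pose proof (Rmin_l d d0); pose proof (Rmin_r d d0). pose proof (Cmod_ge_0 h).
  set (a := fun n => (g n (w0 + h) - g n w0 - h * g' n w0)%C).
  assert (Ha : is_series (K:=C_AbsRing) (V:=C_NormedModule) a (G (w0 + h) - G w0 - h * D)%C).
  { assert (Hy1 : Cmod (w0 + h - w0) < d) by (replace (w0 + h - w0)%C with h by ring; lra).
    exact (is_series_minus _ _ _ _ (is_series_minus _ _ _ _ (HG _ Hy1) (HG _ Hw0))
                           (is_series_scal_l h _ _ HD)). }
  assert (Hbound : forall n, Cmod (a n) <= 3 * Cmod h * M n)
    by (intros n; apply (Cmod_linearization_le (g n) (g' n) w0 d); auto; lra).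
  pose proof (Cseries_tail_le a _ _ _ N0 Ha Hbound (is_series_scal_l (3 * Cmod h) _ _ HSM)) as Ht.
  change (scal (3 * Cmod h) SM) with (3 * Cmod h * SM) in Ht.
  rewrite sum_n_Rmult_l in Ht.
  assert (HS : Cmod (sum_n a N0) <= eps / 2 * Cmod h).
  { eapply Rle_trans; [apply Cmod_sum_n|].
    eapply Rle_trans; [apply (sum_n_le _ (fun _ => e' * Cmod h))|].
    - intros n Hn. apply H0; [lia | lra].
    - rewrite sum_n_const. unfold e'. right. field. lra. }
  set (L := (G (w0 + h) - G w0 - h * D)%C) in *.
  replace L with (sum_n a N0 + (L - sum_n a N0))%C by ring.
  eapply Rle_trans; [apply Cmod_triangle|].
  assert (3 * Cmod h * (SM - sum_n M N0) <= 3 * Cmod h * (eps / 16))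
    by (apply Rmult_le_compat_l; lra).
  nra.
Qed.

(* A logarithm on the half-plane [Re z > 0]; the [atan] formula is wrong elsewhere. *)
Definition Clog_right (z : C) : C := (ln (Cmod z), atan (snd z / fst z)).

Lemma Clog_right_1 : Clog_right 1%C = 0%C.
Proof.
  unfold Clog_right. rewrite Cmod_1, ln_1. simpl.
  replace (0 / 1) with 0 by field. now rewrite atan_0.
Qed.

Lemma Cexp_Clog_right z : 0 < fst z -> Cexp (Clog_right z) = z.
Proof.
  destruct z as [a b]. intros Ha. simpl in Ha. unfold Cexp, Clog_right. cbn [fst snd].
  assert (Hm : 0 < Cmod (a, b)).
  { pose proof (re_le_Cmod (a, b)) as Hre. simpl in Hre. rewrite Rabs_right in Hre by lra. lra. }
  rewrite exp_ln, cos_atan, sin_atan by auto.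
  assert (Hs : sqrt (1 + (b / a)²) = Cmod (a, b) / a).
  { rewrite <- (sqrt_Rsqr (Cmod (a, b) / a)) by (apply Rlt_le, Rdiv_lt_0_compat; lra).
    f_equal. unfold Rsqr.
    assert (Cmod (a, b) * Cmod (a, b) = a * a + b * b).
    { unfold Cmod. simpl. rewrite sqrt_sqrt; [ring | nra]. }
    replace (Cmod (a, b) / a * (Cmod (a, b) / a)) with (Cmod (a, b) * Cmod (a, b) / (a * a))
      by (field; lra).
    rewrite H. field. lra. }
  rewrite Hs. apply injective_projections; simpl; field; split; lra.
Qed.

Lemma ln_1_plus_le : exists d, 0 < d /\ forall h, Rabs h < d -> Rabs (ln (1 + h)) <= 2 * Rabs h.
Proof.
  destruct (derivable_pt_lim_eps ln 1 1) with (eps := 1) as [d [Hd H]]; [|lra|].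
  { pose proof (derivable_pt_lim_ln 1 Rlt_0_1) as D. now rewrite Rinv_1 in D. }
  exists d. split; auto. intros h Hh. specialize (H h Hh). rewrite ln_1 in H.
  replace (ln (1 + h)) with ((ln (1 + h) - 0 - h * 1) + h) by ring.
  eapply Rle_trans; [apply Rabs_triang|]. lra.
Qed.

Lemma atan_le_near_0 : exists d, 0 < d /\ forall h, Rabs h < d -> Rabs (atan h) <= 2 * Rabs h.
Proof.
  destruct (derivable_pt_lim_eps atan 0 1) with (eps := 1) as [d [Hd H]]; [|lra|].
  { pose proof (derivable_pt_lim_atan 0) as D.
    now replace (/ (1 + 0 ^ 2)) with 1 in D by (simpl; field). }
  exists d. split; auto. intros h Hh. specialize (H h Hh). rewrite Rplus_0_l, atan_0 in H.
  replace (atan h) with ((atan h - 0 - h * 1) + h) by ring.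
  eapply Rle_trans; [apply Rabs_triang|]. lra.
Qed.

Lemma Clog_right_near_1 : forall eps, 0 < eps -> exists d, 0 < d /\
  forall z, Cmod (z - 1) < d -> Cmod (Clog_right z) < eps.
Proof.
  intros eps Heps.
  destruct ln_1_plus_le as [d1 [Hd1 H1]]. destruct atan_le_near_0 as [d2 [Hd2 H2]].
  set (d := Rmin (Rmin d1 (d2 / 2)) (Rmin (1 / 2) (eps / 7))).
  assert (Hd : 0 < d) by (unfold d; repeat apply Rmin_pos; lra).
  assert (Hdd : d <= d1 /\ d <= d2 / 2 /\ d <= 1 / 2 /\ d <= eps / 7).
  { unfold d. pose proof (Rmin_l (Rmin d1 (d2 / 2)) (Rmin (1 / 2) (eps / 7))).
    pose proof (Rmin_r (Rmin d1 (d2 / 2)) (Rmin (1 / 2) (eps / 7))).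
    pose proof (Rmin_l d1 (d2 / 2)); pose proof (Rmin_r d1 (d2 / 2)).
    pose proof (Rmin_l (1 / 2) (eps / 7)); pose proof (Rmin_r (1 / 2) (eps / 7)). lra. }
  exists d. split; auto. intros [a b] Hz.
  pose proof (re_le_Cmod ((a, b) - 1)%C) as Ha. pose proof (im_le_Cmod ((a, b) - 1)%C) as Hb.
  change (Rabs (a + - 1) <= Cmod ((a, b) - 1)%C) in Ha.
  change (Rabs (b + - 0) <= Cmod ((a, b) - 1)%C) in Hb.
  replace (a + - 1) with (a - 1) in Ha by ring. replace (b + - 0) with b in Hb by ring.
  pose proof (norm_triangle_inv (K:=C_AbsRing) (V:=C_NormedModule) (a, b) (RtoC 1)) as Hc.
  change (Rabs (Cmod (a, b) - Cmod 1) <= Cmod ((a, b) - 1)%C) in Hc. rewrite Cmod_1 in Hc.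
  assert (Ha' : 1 / 2 < a).
  { assert (Rabs (a - 1) < 1 / 2) as Ha2 by lra. apply Rabs_def2 in Ha2. lra. }
  assert (Hba : Rabs (b / a) <= 2 * Rabs b).
  { unfold Rdiv. rewrite Rabs_mult, Rabs_inv, (Rabs_right a) by lra.
    assert (/ a <= 2) by (apply Rmult_le_reg_r with a; [lra|]; rewrite Rinv_l; lra).
    assert (0 < / a) by (apply Rinv_0_lt_compat; lra). pose proof (Rabs_pos b). nra. }
  specialize (H1 (Cmod (a, b) - 1) ltac:(lra)).
  replace (1 + (Cmod (a, b) - 1)) with (Cmod (a, b)) in H1 by ring.
  specialize (H2 (b / a) ltac:(lra)).
  eapply Rle_lt_trans; [apply Cmod_le_abs_re_im|]. unfold Clog_right. simpl fst. simpl snd. lra.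
Qed.

Lemma Clog_right_taylor1 : forall eps, 0 < eps -> exists d, 0 < d /\
  forall z, Cmod (z - 1) < d -> Cmod (Clog_right z - (z - 1)) <= eps * Cmod (z - 1).
Proof.
  intros eps Heps.
  set (e1 := Rmin (eps / 2) (1 / 2)).
  assert (He1 : 0 < e1) by (unfold e1; apply Rmin_pos; lra).
  assert (He1a : e1 <= eps / 2) by apply Rmin_l. assert (He1b : e1 <= 1 / 2) by apply Rmin_r.
  destruct (Cexp_taylor1 e1 He1) as [d1 [Hd1 H1]].
  destruct (Clog_right_near_1 d1 Hd1) as [d2 [Hd2 H2]].
  exists (Rmin d2 (1 / 2)). split; [apply Rmin_pos; lra|].
  intros z Hz. pose proof (Rmin_l d2 (1 / 2)); pose proof (Rmin_r d2 (1 / 2)).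
  assert (Hf : 0 < fst z).
  { pose proof (re_le_Cmod (z - 1)%C) as Hre. destruct z as [a b].
    change (Rabs (a + - 1) <= Cmod ((a, b) - 1)%C) in Hre. simpl fst.
    assert (Rabs (a + - 1) < 1 / 2) as Ha by lra. apply Rabs_def2 in Ha. lra. }
  specialize (H1 (Clog_right z) (H2 z ltac:(lra))). rewrite Cexp_Clog_right in H1 by auto.
  set (k := Clog_right z) in *.
  replace (k - (z - 1))%C with (- (z - 1 - k))%C by ring. rewrite Cmod_opp.
  assert (Cmod k <= Cmod (z - 1) + Cmod (z - 1 - k)).
  { replace k with ((z - 1) - (z - 1 - k))%C at 1 by ring. unfold Cminus at 1.
    eapply Rle_trans; [apply Cmod_triangle|]. rewrite Cmod_opp. lra. }
  pose proof (Cmod_ge_0 k).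
  assert (Cmod k <= 2 * Cmod (z - 1)) by nra.
  nra.
Qed.

Lemma Cexp_inj_strip alpha beta w w' : beta - alpha < 2 * PI ->
  alpha < snd w < beta -> alpha < snd w' < beta -> Cexp w = Cexp w' -> w = w'.
Proof.
  intros Hab H1 H2 He.
  assert (Hm : exp (fst w) = exp (fst w')) by (rewrite <- !Cmod_Cexp, He; auto).
  apply exp_inv in Hm.
  destruct w as [a b], w' as [a' b']. simpl in *. subst a'.
  unfold Cexp in He. simpl in He. injection He as Hc Hs.
  pose proof (exp_pos a).
  assert (Hc' : cos b = cos b') by (apply Rmult_eq_reg_l with (exp a); lra).
  assert (Hs' : sin b = sin b') by (apply Rmult_eq_reg_l with (exp a); lra).
  set (d := (b - b') / 2).
  assert (Hcd : cos (2 * d) = 1).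
  { unfold d. replace (2 * ((b - b') / 2)) with (b - b') by field.
    rewrite cos_minus, Hc', Hs'. pose proof (sin2_cos2 b') as Hsc. unfold Rsqr in Hsc. lra. }
  rewrite cos_2a_sin in Hcd.
  assert (Hsd : sin d = 0) by nra.
  destruct (sin_eq_0_0 d Hsd) as [k Hk].
  assert (Hdb : - PI < d < PI) by (unfold d; split; lra).
  rewrite Hk in Hdb. pose proof PI_RGT_0.
  assert (Hk1 : -1 < IZR k < 1) by (split; apply Rmult_lt_reg_r with PI; lra).
  destruct Hk1 as [Hk1 Hk2]. apply lt_IZR in Hk1. apply lt_IZR in Hk2.
  assert (k = 0%Z) by lia. subst k. simpl in Hk.
  assert (b = b') by (unfold d in Hk; lra). now subst.
Qed.

Lemma Cexp_factor (P : C -> Prop) (G : C -> C) :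
  (forall w w', P w -> P w' -> Cexp w = Cexp w' -> w = w') ->
  exists F : C -> C, forall w, P w -> F (Cexp w) = G w.
Proof.
  intros Hinj.
  exists (fun x => match excluded_middle_informative (exists w, P w /\ Cexp w = x) with
           | left H => G (proj1_sig (constructive_indefinite_description _ H))
           | right _ => RtoC 0 end).
  intros w Hw. destruct (excluded_middle_informative _) as [Hx|Hx].
  - destruct (constructive_indefinite_description _ Hx) as [w' [Hw' He']]. simpl.
    f_equal. now apply Hinj.
  - exfalso. apply Hx. now exists w.
Qed.

Lemma Cmod_div_sub_1 (x y : C) : x <> 0%C -> Cmod (y * / x - 1)%C = Cmod (y - x)%C / Cmod x.
Proof.
  intros Hx. replace (y * / x - 1)%C with ((y - x) / x)%C by (field; auto).
  rewrite Cmod_div; auto.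
Qed.

Lemma Cmod_div_sub_1_lt (x y : C) d : x <> 0%C ->
  Cmod (y - x)%C < d * Cmod x -> Cmod (y * / x - 1)%C < d.
Proof.
  intros Hx Hy. pose proof (proj1 (Cmod_gt_0 x) Hx) as Hxm.
  rewrite Cmod_div_sub_1 by auto.
  apply Rmult_lt_reg_r with (Cmod x); auto. unfold Rdiv. rewrite Rmult_assoc, Rinv_l by lra. lra.
Qed.

Lemma is_derive_log_branch (x w0 : C) : x <> 0%C ->
  is_derive (K:=C_AbsRing) (V:=AbsRing_NormedModule C_AbsRing)
    (fun y => w0 + Clog_right (y * / x))%C x (/ x)%C.
Proof.
  intros Hx. pose proof (proj1 (Cmod_gt_0 x) Hx) as Hxm.
  apply (is_derive_eps (K:=C_AbsRing) (V:=AbsRing_NormedModule C_AbsRing)). intros eps Heps.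
  destruct (Clog_right_taylor1 (eps * Cmod x) ltac:(nra)) as [d [Hd Hd1]].
  exists (d * Cmod x). split; [nra|].
  intros y Hy. change (Cmod (y - x) < d * Cmod x) in Hy.
  change (Cmod (w0 + Clog_right (y * / x) - (w0 + Clog_right (x * / x)) - (y - x) * / x)%C
          <= eps * Cmod (y - x)).
  rewrite Cinv_r, Clog_right_1 by auto.
  replace (w0 + Clog_right (y * / x) - (w0 + 0) - (y - x) * / x)%C
    with (Clog_right (y * / x) - (y * / x - 1))%C by (field; auto).
  eapply Rle_trans; [apply Hd1, Cmod_div_sub_1_lt; auto|].
  rewrite Cmod_div_sub_1 by auto. right. field. lra.
Qed.

(* Near [x = Cexp w0], [F] is [G] composed with the local inverse
   [y |-> w0 + Clog_right (y / x)] of [Cexp]. *)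
Lemma ex_derive_Cexp_factor (G F : C -> C) (P : C -> Prop) w0 D :
  (exists e, 0 < e /\ forall w, Cmod (w - w0) < e -> P w) ->
  (forall w, P w -> F (Cexp w) = G w) ->
  is_derive (K:=C_AbsRing) (V:=C_NormedModule) G w0 D ->
  ex_derive (K:=C_AbsRing) (V:=C_NormedModule) F (Cexp w0).
Proof.
  intros [e [He HP]] HF HG.
  set (x := Cexp w0).
  assert (Hx : x <> 0%C) by apply Cexp_neq0.
  pose proof (proj1 (Cmod_gt_0 x) Hx) as Hxm.
  set (L := fun y => (w0 + Clog_right (y * / x))%C).
  pose proof (is_derive_comp G L x D (/ x)%C) as Hcomp.
  replace (L x) with w0 in Hcomp by (unfold L; rewrite Cinv_r, Clog_right_1 by auto; ring).
  specialize (Hcomp HG (is_derive_log_branch x w0 Hx)).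
  exists (scal (/ x)%C D).
  eapply is_derive_ext_loc; [|exact Hcomp].
  destruct (Clog_right_near_1 e He) as [d2 [Hd2 H2]].
  set (d := Rmin d2 (1 / 2)).
  assert (Hd : 0 < d) by (apply Rmin_pos; lra).
  assert (Hd3 : 0 < d * Cmod x) by (apply Rmult_lt_0_compat; auto).
  exists (mkposreal _ Hd3). intros y Hy. change (Cmod (y - x) < d * Cmod x) in Hy.
  pose proof (Cmod_div_sub_1_lt x y d Hx Hy) as Hz.
  pose proof (Rmin_l d2 (1 / 2)); pose proof (Rmin_r d2 (1 / 2)).
  assert (Hf : 0 < fst (y * / x)%C).
  { assert (Hre : Rabs (fst (y * / x)%C - 1) <= Cmod (y * / x - 1)).
    { replace (fst (y * / x)%C - 1) with (Re (y * / x - 1)%C) by (unfold Re; simpl; ring).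
      apply re_le_Cmod. }
    assert (Rabs (fst (y * / x)%C - 1) < 1 / 2) as Ha by (unfold d in *; lra).
    apply Rabs_def2 in Ha. lra. }
  assert (HPL : P (L y)).
  { apply HP. unfold L. replace (w0 + Clog_right (y * / x) - w0)%C with (Clog_right (y * / x))
      by ring. apply H2. unfold d in *; lra. }
  rewrite <- (HF _ HPL). f_equal. unfold L. rewrite Cexp_plus, Cexp_Clog_right by auto.
  fold x. field. auto.
Qed.

(** * The norms of the spaces H^j *)

(* Eigenvalue of [a + i g delta_t] on [t^(m - nu)], the monomial carrying the coefficient
   of index [m] of an element of [O_nu]. *)
Definition symbol (g : R) (nu : nat) (a : R) (m : nat) : C :=
  (RtoC a + Ci * RtoC (g * (INR m - INR nu)))%C.

Lemma iter_opT_symbol j g nu a f m :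
  Nat.iter j (opT g nu a) f m = (Defs.Cpow (symbol g nu a m) j * f m)%C.
Proof.
  induction j as [|j IH]; simpl Nat.iter; [simpl; ring|].
  unfold opT at 1. rewrite IH. simpl Defs.Cpow. unfold symbol. ring.
Qed.

Lemma Cmod_Cpow z j : Cmod (Defs.Cpow z j) = Cmod z ^ j.
Proof.
  induction j as [|j IH]; simpl Defs.Cpow; [apply Cmod_1|].
  rewrite Cmod_mult, IH. simpl. ring.
Qed.

Lemma Rabs_le_Cmod_symbol g nu a m : Rabs a <= Cmod (symbol g nu a m).
Proof.
  pose proof (re_le_Cmod (symbol g nu a m)) as H.
  replace (Re (symbol g nu a m)) with a in H by (unfold symbol, Re; simpl; ring). exact H.
Qed.

Lemma Cmod_symbol_le g nu a b m : 0 <= a <= b -> Cmod (symbol g nu a m) <= Cmod (symbol g nu b m).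
Proof. intros H. unfold Cmod, symbol. simpl. apply sqrt_le_1_alt. nra. Qed.

Lemma Series_ge_0 (a : nat -> R) : (forall n, 0 <= a n) -> ex_series a -> 0 <= Series a.
Proof.
  intros H He. assert (Series (fun n => 0 * a n) <= Series a).
  { apply Series_le; auto. intros n. specialize (H n). lra. }
  rewrite Series_scal_l in H0. lra.
Qed.

Lemma ex_series_le_nonneg (a b : nat -> R) :
  (forall n, 0 <= a n <= b n) -> ex_series b -> ex_series a.
Proof.
  intros H Hb. apply (ex_series_le (K:=R_AbsRing) (V:=R_CompleteNormedModule) a b); auto.
  intros n. change (Rabs (a n) <= b n). rewrite Rabs_right; apply H || apply Rle_ge, H.
Qed.

Lemma ex_series_0 : ex_series (fun _ : nat => 0).
Proof.
  apply ex_series_ext with (fun n => 0 ^ n * 0); [intros n; apply Rmult_0_r|].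
  apply ex_series_scal_r, ex_series_geom. rewrite Rabs_R0. lra.
Qed.

Section Onorm.
Variables (r RR : R) (nu : nat).
Hypotheses (Hr : 0 < r) (HR : 0 < RR).

Lemma Onorm_ge_0 f : inO RR f -> 0 <= Onorm r RR nu f.
Proof.
  intros Hf. unfold Onorm. apply Rmult_le_pos.
  - left. apply Rinv_0_lt_compat, pow_lt; auto.
  - apply Series_ge_0; auto. intros n. apply Rmult_le_pos; [apply Cmod_ge_0|].
    left; apply pow_lt; auto.
Qed.

Lemma Onorm_le_add (f f1 f2 : nat -> C) :
  (forall m, Cmod (f m) <= Cmod (f1 m) + Cmod (f2 m)) -> inO RR f1 -> inO RR f2 ->
  inO RR f /\ Onorm r RR nu f <= Onorm r RR nu f1 + Onorm r RR nu f2.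
Proof.
  intros Hle H1 H2.
  assert (Hw : forall m, 0 <= Cmod (f m) * RR ^ m <= Cmod (f1 m) * RR ^ m + Cmod (f2 m) * RR ^ m).
  { intros m. pose proof (pow_lt RR m HR). split.
    - apply Rmult_le_pos; [apply Cmod_ge_0 | lra].
    - rewrite <- Rmult_plus_distr_r. apply Rmult_le_compat_r; [lra | apply Hle]. }
  assert (H12 : ex_series (fun m => Cmod (f1 m) * RR ^ m + Cmod (f2 m) * RR ^ m))
    by (apply (ex_series_plus (K:=R_AbsRing) (V:=R_NormedModule)); auto).
  split; [exact (ex_series_le_nonneg _ _ Hw H12)|].
  unfold Onorm. rewrite <- Rmult_plus_distr_l. apply Rmult_le_compat_l.
  - left. apply Rinv_0_lt_compat, pow_lt; auto.
  - rewrite <- Series_plus by auto. now apply Series_le.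
Qed.

Lemma Onorm_le (f f' : nat -> C) : (forall m, Cmod (f m) <= Cmod (f' m)) -> inO RR f' ->
  inO RR f /\ Onorm r RR nu f <= Onorm r RR nu f'.
Proof.
  intros Hle Hf'.
  assert (Hw : forall m, 0 <= Cmod (f m) * RR ^ m <= Cmod (f' m) * RR ^ m).
  { intros m. pose proof (pow_lt RR m HR). split.
    - apply Rmult_le_pos; [apply Cmod_ge_0 | lra].
    - apply Rmult_le_compat_r; [lra | apply Hle]. }
  split; [exact (ex_series_le_nonneg _ _ Hw Hf')|].
  unfold Onorm. apply Rmult_le_compat_l.
  - left. apply Rinv_0_lt_compat, pow_lt; auto.
  - now apply Series_le.
Qed.
End Onorm.

Section Hspaces.
Variables (r RR g : R) (N mu : nat).
Hypotheses (Hr : 0 < r) (HR : 0 < RR).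

Definition Hcoef (j : nat) (th : nat -> nat -> C) (k : nat) : nat -> C :=
  Nat.iter j (opT g (k * mu) (INR (k + N))) (th k).

Lemma Hcoef_symbol j th k m :
  Hcoef j th k m = (Defs.Cpow (symbol g (k * mu) (INR (k + N)) m) j * th k m)%C.
Proof. apply iter_opT_symbol. Qed.

Lemma Hcoef_zero j th k m : th k m = RtoC 0 -> Hcoef j th k m = RtoC 0.
Proof. intros H. rewrite Hcoef_symbol, H. ring. Qed.

Lemma Hcoef_Hsub j th th0 k m :
  Hcoef j (Hsub th th0) k m = (Hcoef j th k m - Hcoef j th0 k m)%C.
Proof. rewrite !Hcoef_symbol. unfold Hsub, Cminus. ring. Qed.

Lemma Cmod_Hcoef_le j j' th k m : (j <= j')%nat -> (1 <= k)%nat ->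
  Cmod (Hcoef j th k m) <= Cmod (Hcoef j' th k m).
Proof.
  intros Hj Hk. rewrite !Hcoef_symbol, !Cmod_mult, !Cmod_Cpow.
  apply Rmult_le_compat_r; [apply Cmod_ge_0|]. apply Rle_pow; [|exact Hj].
  eapply Rle_trans; [|apply Rabs_le_Cmod_symbol].
  rewrite Rabs_right by (apply Rle_ge, pos_INR). apply (le_INR 1). lia.
Qed.

Lemma Cmod_Hcoef_Hdelta j th k m : (1 <= j)%nat ->
  Cmod (Hcoef (j - 1) (Hdelta g mu th) k m) <= Cmod (Hcoef j th k m).
Proof.
  intros Hj. rewrite !Hcoef_symbol. unfold Hdelta, opT.
  fold (symbol g (k * mu) (INR k) m).
  rewrite !Cmod_mult, !Cmod_Cpow.
  replace j with (S (j - 1)) at 2 by lia. simpl pow.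
  pose proof (Cmod_symbol_le g (k * mu) (INR k) (INR (k + N)) m
                (conj (pos_INR k) (le_INR k (k + N) ltac:(lia)))).
  pose proof (Cmod_ge_0 (symbol g (k * mu) (INR k) m)).
  pose proof (Cmod_ge_0 (th k m)).
  assert (0 <= Cmod (symbol g (k * mu) (INR (k + N)) m) ^ (j - 1))
    by (apply pow_le, Cmod_ge_0).
  rewrite <- Rmult_assoc. apply Rmult_le_compat_r; auto. nra.
Qed.

Lemma Hterm_ge_0 j th k : inO RR (Hcoef j th k) -> 0 <= Hterm r RR g N mu j th k.
Proof. apply Onorm_ge_0; auto. Qed.

Lemma inH_inO j th : inH r RR g N mu j th -> forall k, inO RR (Hcoef j th k).
Proof.
  intros [H0 [_ [Hj _]]] [|k].
  - unfold inO. apply ex_series_ext with (fun _ => 0).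
    + intros m. rewrite Hcoef_zero, Cmod_0, Rmult_0_l by auto. reflexivity.
    + exact ex_series_0.
  - apply Hj. lia.
Qed.

Lemma Hnorm_le_of_coef_le j j' th th' :
  (forall k m, Cmod (Hcoef j' th' k m) <= Cmod (Hcoef j th k m)) ->
  (forall k, inO RR (Hcoef j th k)) -> ex_series (Hterm r RR g N mu j th) ->
  (forall k, inO RR (Hcoef j' th' k)) /\ ex_series (Hterm r RR g N mu j' th') /\
  Hnorm r RR g N mu j' th' <= Hnorm r RR g N mu j th.
Proof.
  intros Hle HO Hex.
  assert (Hk : forall k, inO RR (Hcoef j' th' k) /\
                 Hterm r RR g N mu j' th' k <= Hterm r RR g N mu j th k)
    by (intros k; apply (Onorm_le r RR (k * mu) Hr HR); [apply Hle | apply HO]).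
  assert (Ht : forall k, 0 <= Hterm r RR g N mu j' th' k <= Hterm r RR g N mu j th k)
    by (intros k; split; [apply Hterm_ge_0, Hk | apply Hk]).
  split; [apply Hk|]. split; [exact (ex_series_le_nonneg _ _ Ht Hex)|].
  now apply Series_le.
Qed.

Lemma inH_le j j' th : (j <= j')%nat -> inH r RR g N mu j' th ->
  inH r RR g N mu j th /\ Hnorm r RR g N mu j th <= Hnorm r RR g N mu j' th.
Proof.
  intros Hj HH. pose proof (inH_inO _ _ HH) as HO.
  destruct HH as [H0 [Hth [_ Hex]]].
  assert (Hle : forall k m, Cmod (Hcoef j th k m) <= Cmod (Hcoef j' th k m)).
  { intros [|k] m.
    - rewrite !Hcoef_zero by auto. lra.
    - apply Cmod_Hcoef_le; lia. }
  destruct (Hnorm_le_of_coef_le j' j th th Hle HO Hex) as [A [B C']].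
  repeat split; auto. intros k _. apply A.
Qed.

Lemma inH_Hdelta j th : (1 <= j)%nat -> inH r RR g N mu j th ->
  inH r RR g N mu (j - 1) (Hdelta g mu th) /\
  Hnorm r RR g N mu (j - 1) (Hdelta g mu th) <= Hnorm r RR g N mu j th.
Proof.
  intros Hj HH. pose proof (inH_inO _ _ HH) as HO.
  destruct HH as [H0 [_ [_ Hex]]].
  destruct (Hnorm_le_of_coef_le j (j - 1) th (Hdelta g mu th)
              (fun k m => Cmod_Hcoef_Hdelta j th k m Hj) HO Hex) as [A [B C']].
  repeat split; auto.
  - intros m. unfold Hdelta, opT. rewrite H0. ring.
  - intros k Hk. apply (Onorm_le r RR (k * mu) Hr HR _ (Hcoef (j - 1) (Hdelta g mu th) k)); auto.
    intros m. apply (Cmod_Hcoef_le 0 (j - 1) (Hdelta g mu th) k m); lia.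
  - intros k _. apply A.
Qed.

Lemma inH_Hsub j th th0 : inH r RR g N mu j th -> inH r RR g N mu j th0 ->
  inH r RR g N mu j (Hsub th th0) /\
  Hnorm r RR g N mu j (Hsub th th0) <= Hnorm r RR g N mu j th + Hnorm r RR g N mu j th0.
Proof.
  intros HH HH0. pose proof (inH_inO _ _ HH) as HO. pose proof (inH_inO _ _ HH0) as HO0.
  destruct HH as [Z [Hth [_ Hex]]], HH0 as [Z0 [Hth0 [_ Hex0]]].
  assert (Htri : forall (f f0 : nat -> C) m, Cmod (f m - f0 m)%C <= Cmod (f m) + Cmod (f0 m)).
  { intros f f0 m. unfold Cminus. eapply Rle_trans; [apply Cmod_triangle|]. rewrite Cmod_opp. lra. }
  assert (Hk : forall k, inO RR (Hcoef j (Hsub th th0) k) /\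
     Hterm r RR g N mu j (Hsub th th0) k <= Hterm r RR g N mu j th k + Hterm r RR g N mu j th0 k).
  { intros k.
    apply (Onorm_le_add r RR (k * mu) Hr HR _ (Hcoef j th k) (Hcoef j th0 k)); auto.
    intros m. rewrite Hcoef_Hsub. apply Htri. }
  assert (Ht : forall k, 0 <= Hterm r RR g N mu j (Hsub th th0) k <=
                         Hterm r RR g N mu j th k + Hterm r RR g N mu j th0 k)
    by (intros k; split; [apply Hterm_ge_0, Hk | apply Hk]).
  assert (Hex' : ex_series (fun k => Hterm r RR g N mu j th k + Hterm r RR g N mu j th0 k))
    by (apply (ex_series_plus (K:=R_AbsRing) (V:=R_NormedModule)); auto).
  repeat split.
  - intros m. unfold Hsub. rewrite Z, Z0. ring.
  - intros k Hk'. apply (Onorm_le_add r RR (k * mu) Hr HR _ (th k) (th0 k)); auto.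
    intros m. apply Htri.
  - intros k _. apply Hk.
  - exact (ex_series_le_nonneg _ _ Ht Hex').
  - unfold Hnorm. rewrite <- Series_plus by auto. now apply Series_le.
Qed.
End Hspaces.

Lemma Hdelta_Hsub g mu th th0 :
  Hsub (Hdelta g mu th) (Hdelta g mu th0) = Hdelta g mu (Hsub th th0).
Proof.
  apply functional_extensionality. intros k. apply functional_extensionality. intros m.
  unfold Hsub, Hdelta, opT, Cminus. ring.
Qed.

Lemma is_series_sum_n (c : nat -> nat -> R) (l : nat -> R) n :
  (forall a, is_series (c a) (l a)) -> is_series (fun m => sum_n (fun a => c a m) n) (sum_n l n).
Proof.
  intros H. induction n as [|n IH].
  - rewrite sum_O. eapply is_series_ext; [|apply (H 0%nat)]. intros m. now rewrite sum_O.
  - rewrite sum_Sn. eapply is_series_ext; [|apply (is_series_plus _ _ _ _ IH (H (S n)))].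
    intros m. simpl. now rewrite sum_Sn.
Qed.

Lemma is_series_Cauchy_product (u v : nat -> R) :
  (forall n, 0 <= u n) -> (forall n, 0 <= v n) -> ex_series u -> ex_series v ->
  is_series (fun m => sum_n (fun i => u i * v (m - i)%nat) m) (Series u * Series v).
Proof.
  intros Hu Hv Eu Ev.
  eapply is_series_ext;
    [|exact (is_series_mult_pos u v _ _ (Series_correct _ Eu) (Series_correct _ Ev) Hu Hv)].
  intros m. simpl. now rewrite sum_n_Reals.
Qed.

Lemma sum_n_C_0 (f : nat -> C) n : (forall k, f k = RtoC 0) -> sum_n f n = RtoC 0.
Proof.
  intros H. induction n as [|n IH]; [now rewrite sum_O|].
  rewrite sum_Sn, IH, H. change (RtoC 0 + RtoC 0 = RtoC 0)%C. ring.
Qed.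

Section Product.
Variables (r RR g : R) (N mu : nat).
Hypotheses (Hr : 0 < r) (HR : 0 < RR).

Let weighted (th : nat -> nat -> C) a i := Cmod (th a i) * RR ^ i.

Lemma weighted_ge_0 th a i : 0 <= weighted th a i.
Proof. apply Rmult_le_pos; [apply Cmod_ge_0 | left; apply pow_lt; auto]. Qed.

Lemma weighted_Hmul_le th1 th2 k m :
  weighted (Hmul th1 th2) k m <=
  sum_n (fun a => sum_n (fun i => weighted th1 a i * weighted th2 (k - a)%nat (m - i)%nat) m) k.
Proof.
  unfold weighted, Hmul.
  apply Rle_trans with
    (sum_n (fun a => sum_n (fun i => Cmod (th1 a i) * Cmod (th2 (k - a)%nat (m - i)%nat)) m) k * RR ^ m).
  { apply Rmult_le_compat_r; [left; apply pow_lt; auto|].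
    eapply Rle_trans; [apply Cmod_sum_n|]. apply sum_n_le. intros a _.
    eapply Rle_trans; [apply Cmod_sum_n|]. apply sum_n_le. intros i _.
    rewrite Cmod_mult. lra. }
  rewrite Rmult_comm. rewrite <- sum_n_Rmult_l. apply sum_n_le. intros a _.
  rewrite <- sum_n_Rmult_l. apply sum_n_le. intros i Hi.
  replace (RR ^ m) with (RR ^ i * RR ^ (m - i)) by (rewrite <- pow_add; f_equal; lia).
  right; ring.
Qed.

(* The weights [r^(-k mu)] are multiplicative: [r^(k mu) = r^(a mu) r^((k - a) mu)]. *)
Lemma Hterm_Hmul_le th1 th2 :
  inH r RR g N mu 0 th1 -> inH r RR g N mu 0 th2 -> forall k,
  inO RR (Hmul th1 th2 k) /\
  Hterm r RR g N mu 0 (Hmul th1 th2) k <=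
  sum_n (fun a => Hterm r RR g N mu 0 th1 a * Hterm r RR g N mu 0 th2 (k - a)%nat) k.
Proof.
  intros HH1 HH2 k.
  pose proof (inH_inO r RR g N mu 0 th1 HH1) as E1. pose proof (inH_inO r RR g N mu 0 th2 HH2) as E2.
  simpl in E1, E2.
  set (S1 := fun a => Series (weighted th1 a)). set (S2 := fun a => Series (weighted th2 a)).
  assert (HB : is_series
      (fun m => sum_n (fun a => sum_n (fun i => weighted th1 a i * weighted th2 (k - a)%nat (m - i)%nat) m) k)
      (sum_n (fun a => S1 a * S2 (k - a)%nat) k)).
  { apply (is_series_sum_n (fun a m => sum_n (fun i => weighted th1 a i * weighted th2 (k - a)%nat (m - i)%nat) m)).
    intros a. apply is_series_Cauchy_product; try apply weighted_ge_0; [apply E1 | apply E2]. }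
  assert (Hw : forall m, 0 <= weighted (Hmul th1 th2) k m <=
     sum_n (fun a => sum_n (fun i => weighted th1 a i * weighted th2 (k - a)%nat (m - i)%nat) m) k)
    by (intros m; split; [apply weighted_ge_0 | apply weighted_Hmul_le]).
  assert (HO : inO RR (Hmul th1 th2 k)) by exact (ex_series_le_nonneg _ _ Hw (ex_intro _ _ HB)).
  split; [exact HO|].
  unfold Hterm, Onorm. simpl Nat.iter.
  apply Rle_trans with (/ r ^ (k * mu) * sum_n (fun a => S1 a * S2 (k - a)%nat) k).
  { apply Rmult_le_compat_l; [left; apply Rinv_0_lt_compat, pow_lt; auto|].
    rewrite <- (is_series_unique _ _ HB). apply Series_le; [exact Hw|]. eexists; apply HB. }
  rewrite <- sum_n_Rmult_l. apply sum_n_le. intros a Ha.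
  unfold S1, S2, weighted.
  replace (r ^ (k * mu)) with (r ^ (a * mu) * r ^ ((k - a) * mu)) by (rewrite <- pow_add; f_equal; nia).
  right. field. split; apply pow_nonzero; lra.
Qed.

Lemma inH_Hmul th1 th2 : inH r RR g N mu 0 th1 -> inH r RR g N mu 0 th2 ->
  inH r RR g N mu 0 (Hmul th1 th2) /\
  Hnorm r RR g N mu 0 (Hmul th1 th2) <= Hnorm r RR g N mu 0 th1 * Hnorm r RR g N mu 0 th2.
Proof.
  intros HH1 HH2.
  pose proof (Hterm_Hmul_le th1 th2 HH1 HH2) as Hk.
  pose proof (inH_inO r RR g N mu 0 th1 HH1) as E1. pose proof (inH_inO r RR g N mu 0 th2 HH2) as E2.
  destruct HH1 as [Z1 [_ [_ X1]]], HH2 as [_ [_ [_ X2]]].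
  assert (Hprod : is_series (fun k => sum_n (fun a => Hterm r RR g N mu 0 th1 a *
                                                   Hterm r RR g N mu 0 th2 (k - a)%nat) k)
                    (Hnorm r RR g N mu 0 th1 * Hnorm r RR g N mu 0 th2)).
  { apply is_series_Cauchy_product; auto; intros a; apply Hterm_ge_0; auto. }
  assert (Ht : forall k, 0 <= Hterm r RR g N mu 0 (Hmul th1 th2) k <=
      sum_n (fun a => Hterm r RR g N mu 0 th1 a * Hterm r RR g N mu 0 th2 (k - a)%nat) k)
    by (intros k; split; [apply Hterm_ge_0; auto; apply Hk | apply Hk]).
  repeat split.
  - intros m. unfold Hmul. rewrite sum_O. apply sum_n_C_0. intros i. rewrite Z1. ring.
  - intros k _. apply Hk.
  - intros k _. apply Hk.
  - exact (ex_series_le_nonneg _ _ Ht (ex_intro _ _ Hprod)).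
  - rewrite <- (is_series_unique _ _ Hprod). now apply Series_le; [|eexists; exact Hprod].
Qed.
End Product.

(** * Holomorphy on the sector *)

Lemma exp_le_mono x y : x <= y -> exp x <= exp y.
Proof. intros [H|H]; [left; now apply exp_increasing | subst; lra]. Qed.

Lemma exp_INR_mult n x : exp (INR n * x) = exp x ^ n.
Proof.
  induction n as [|n IH]; [simpl; now rewrite Rmult_0_l, exp_0|].
  rewrite S_INR, Rmult_plus_distr_r, Rmult_1_l, exp_plus, IH. simpl. ring.
Qed.

Lemma INR_mult_exp_le n s : s < 0 -> INR n * exp (INR n * s) <= / (1 - exp s).
Proof.
  intros Hs. rewrite exp_INR_mult.
  set (q := exp s).
  assert (Hq : 0 < q < 1) by (split; [apply exp_pos | rewrite <- exp_0; now apply exp_increasing]).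
  assert (H : INR n * q ^ n * (1 - q) <= 1 - q ^ n).
  { induction n as [|n IH]; [simpl; lra|].
    rewrite S_INR. simpl.
    assert (0 <= q ^ n) by (apply pow_le; lra).
    assert (q ^ n <= 1) by (rewrite <- (pow1 n); apply pow_incr; lra).
    assert (q * (INR n * q ^ n * (1 - q)) <= q * (1 - q ^ n)) by (apply Rmult_le_compat_l; lra).
    assert (0 <= (1 - q) * (1 - q * q ^ n)) by (apply Rmult_le_pos; nra).
    nra. }
  assert (0 <= q ^ n) by (apply pow_le; lra).
  apply Rmult_le_reg_r with (1 - q); [lra|]. rewrite Rinv_l by lra. lra.
Qed.

Lemma ex_series_Rmult_l (c : R) (a : nat -> R) : ex_series a -> ex_series (fun n => c * a n).
Proof. apply (ex_series_scal_l (K:=R_AbsRing) (V:=R_NormedModule)). Qed.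

(* With [x = Cexp w] and [t = x^(i g)], the monomial [t^(m - k mu) x^k] is [Cexp (expo k m * w)]. *)
Definition expo (g : R) (mu k m : nat) : C :=
  (RtoC (INR k) + Ci * RtoC (g * (INR m - INR (k * mu))))%C.

Definition Plog (g : R) (mu : nat) (th : nat -> nat -> C) k (w : C) : C :=
  Cseries (fun m => th k m * Cexp (expo g mu k m * w))%C.

Definition dPlog (g : R) (mu : nat) (th : nat -> nat -> C) k (w : C) : C :=
  Cseries (fun m => th k m * expo g mu k m * Cexp (expo g mu k m * w))%C.

Definition Glog (g : R) (mu : nat) (th : nat -> nat -> C) (w : C) : C :=
  Cseries (fun k => Plog g mu th k w).

Definition coef_majorant (r RR : R) (mu : nat) (th : nat -> nat -> C) k m : R :=
  Cmod (th k m) * exp (INR m * ln RR - INR (k * mu) * ln r).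

Lemma coef_majorant_eq r RR mu th k m : 0 < r -> 0 < RR ->
  coef_majorant r RR mu th k m = / r ^ (k * mu) * (Cmod (th k m) * RR ^ m).
Proof.
  intros Hr HR. unfold coef_majorant, Rminus.
  rewrite exp_plus, exp_Ropp, !exp_INR_mult, !exp_ln by auto. ring.
Qed.

Lemma Cmod_Cexp_expo g mu k m w s1 a b : fst w <= s1 -> a <= - g * snd w <= b ->
  Cmod (Cexp (expo g mu k m * w)) <= exp (INR k * s1 + INR m * b - INR (k * mu) * a).
Proof.
  intros H1 [H2 H3]. rewrite Cmod_Cexp. apply exp_le_mono.
  replace (fst (expo g mu k m * w)%C) with (INR k * fst w + (INR m - INR (k * mu)) * (- g * snd w))
    by (destruct w; unfold expo; simpl; ring).
  pose proof (pos_INR k); pose proof (pos_INR m); pose proof (pos_INR (k * mu)). nra.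
Qed.

Lemma Cmod_expo_le g mu k m : Cmod (expo g mu k m) <= INR k * (1 + Rabs g * INR mu) + Rabs g * INR m.
Proof.
  unfold expo. eapply Rle_trans; [apply Cmod_triangle|].
  rewrite Cmod_mult, Cmod_Ci, !Cmod_R, Rabs_right by (apply Rle_ge, pos_INR).
  rewrite Rabs_mult, mult_INR.
  pose proof (pos_INR k); pose proof (pos_INR m); pose proof (pos_INR mu); pose proof (Rabs_pos g).
  assert (Rabs (INR m - INR k * INR mu) <= INR m + INR k * INR mu) by (apply Rabs_le; nra).
  nra.
Qed.

Section LogCoordinates.
Variables (r RR g : R) (mu : nat) (th : nat -> nat -> C).

Lemma Cmod_term_le k m w s1 a b :
  fst w <= s1 -> s1 <= 0 -> ln r <= a -> a <= - g * snd w <= b -> b <= ln RR ->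
  Cmod (th k m * Cexp (expo g mu k m * w))%C <= coef_majorant r RR mu th k m.
Proof.
  intros H1 H2 H3 H4 H5. unfold coef_majorant. rewrite Cmod_mult.
  apply Rmult_le_compat_l; [apply Cmod_ge_0|].
  eapply Rle_trans; [apply (Cmod_Cexp_expo g mu k m w s1 a b); auto|]. apply exp_le_mono.
  pose proof (pos_INR k); pose proof (pos_INR m); pose proof (pos_INR (k * mu)). nra.
Qed.

(* Strictly inside the strip, the factor [expo] produced by differentiation is absorbed by
   the geometric decay [exp (k s1)] and [exp (m (b - ln RR))]. *)
Lemma Cmod_dterm_le k m w s1 a b :
  fst w <= s1 -> s1 < 0 -> ln r <= a -> a <= - g * snd w <= b -> b < ln RR ->
  Cmod (th k m * expo g mu k m * Cexp (expo g mu k m * w))%C <=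
  ((1 + Rabs g * INR mu) * / (1 - exp s1) + Rabs g * / (1 - exp (b - ln RR))) *
  coef_majorant r RR mu th k m.
Proof.
  intros H1 H2 H3 H4 H5. unfold coef_majorant. rewrite !Cmod_mult.
  set (c := 1 + Rabs g * INR mu).
  set (E := exp (INR m * ln RR - INR (k * mu) * ln r)).
  set (u := exp (INR k * s1)). set (v := exp (INR m * (b - ln RR))).
  pose proof (pos_INR k); pose proof (pos_INR m); pose proof (pos_INR (k * mu)); pose proof (pos_INR mu).
  pose proof (Rabs_pos g). pose proof (Cmod_ge_0 (th k m)).
  assert (Hc : 1 <= c) by (unfold c; nra).
  assert (HE : 0 < E) by apply exp_pos.
  assert (Hu : 0 < u <= 1) by (unfold u; split; [apply exp_pos | rewrite <- exp_0; apply exp_le_mono; nra]).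
  assert (Hv : 0 < v <= 1) by (unfold v; split; [apply exp_pos | rewrite <- exp_0; apply exp_le_mono; nra]).
  assert (Hku : INR k * u <= / (1 - exp s1)) by (apply INR_mult_exp_le; lra).
  assert (Hmv : INR m * v <= / (1 - exp (b - ln RR))) by (apply INR_mult_exp_le; lra).
  assert (HX : Cmod (Cexp (expo g mu k m * w)) <= u * v * E).
  { eapply Rle_trans; [apply (Cmod_Cexp_expo g mu k m w s1 a b); auto|].
    unfold u, v, E. rewrite <- !exp_plus. apply exp_le_mono. nra. }
  assert (HL := Cmod_expo_le g mu k m). fold c in HL.
  pose proof (Cmod_ge_0 (expo g mu k m)). pose proof (Cmod_ge_0 (Cexp (expo g mu k m * w))).
  apply Rle_trans with (Cmod (th k m) * ((INR k * c + Rabs g * INR m) * (u * v * E))).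
  { rewrite Rmult_assoc. apply Rmult_le_compat_l; auto. apply Rmult_le_compat; auto. }
  replace ((c * / (1 - exp s1) + Rabs g * / (1 - exp (b - ln RR))) * (Cmod (th k m) * E))
    with (Cmod (th k m) * ((c * / (1 - exp s1) + Rabs g * / (1 - exp (b - ln RR))) * E)) by ring.
  apply Rmult_le_compat_l; auto.
  replace ((INR k * c + Rabs g * INR m) * (u * v * E))
    with ((c * (INR k * u) * v + Rabs g * (INR m * v) * u) * E) by ring.
  apply Rmult_le_compat_r; [lra|].
  assert (0 <= INR k * u) by nra. assert (0 <= INR m * v) by nra.
  assert (INR k * u * v <= / (1 - exp s1)) by nra.
  assert (INR m * v * u <= / (1 - exp (b - ln RR))) by nra.
  assert (c * (INR k * u) * v <= c * / (1 - exp s1))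
    by (rewrite Rmult_assoc; apply Rmult_le_compat_l; lra).
  assert (Rabs g * (INR m * v) * u <= Rabs g * / (1 - exp (b - ln RR)))
    by (rewrite Rmult_assoc; apply Rmult_le_compat_l; lra).
  lra.
Qed.

Hypothesis Hmaj : forall k, ex_series (coef_majorant r RR mu th k).
Hypothesis Hmaj_sum : ex_series (fun k => Series (coef_majorant r RR mu th k)).

Lemma Plog_bound k y s1 a b :
  fst y <= s1 -> s1 <= 0 -> ln r <= a -> a <= - g * snd y <= b -> b <= ln RR ->
  is_series (K:=C_AbsRing) (V:=C_NormedModule)
    (fun m => th k m * Cexp (expo g mu k m * y))%C (Plog g mu th k y) /\
  Cmod (Plog g mu th k y) <= Series (coef_majorant r RR mu th k).
Proof.
  intros. apply Cseries_dominated; auto. intros m. apply (Cmod_term_le k m y s1 a b); auto.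
Qed.

Lemma is_series_Glog y s1 a b :
  fst y <= s1 -> s1 <= 0 -> ln r <= a -> a <= - g * snd y <= b -> b <= ln RR ->
  is_series (K:=C_AbsRing) (V:=C_NormedModule) (fun k => Plog g mu th k y) (Glog g mu th y).
Proof.
  intros. apply (Cseries_dominated _ (fun k => Series (coef_majorant r RR mu th k))); auto.
  intros k. apply (Plog_bound k y s1 a b); auto.
Qed.

Section Disc.
Variables (w0 : C) (d s1 a b : R).
Hypotheses (Hd : 0 < d) (Hs1 : s1 < 0) (Ha : ln r <= a) (Hb : b < ln RR).
Hypothesis Hdisc : forall y, Cmod (y - w0) < d -> fst y <= s1 /\ a <= - g * snd y <= b.

Let cst := (1 + Rabs g * INR mu) * / (1 - exp s1) + Rabs g * / (1 - exp (b - ln RR)).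

Lemma is_derive_Plog k y : Cmod (y - w0) < d ->
  is_derive (K:=C_AbsRing) (V:=C_NormedModule) (Plog g mu th k) y (dPlog g mu th k y) /\
  Cmod (dPlog g mu th k y) <= cst * Series (coef_majorant r RR mu th k).
Proof.
  intros Hy.
  assert (Hin : forall z, Cmod (z - y) < d - Cmod (y - w0) -> Cmod (z - w0) < d).
  { intros z Hz. replace (z - w0)%C with ((z - y) + (y - w0))%C by ring.
    eapply Rle_lt_trans; [apply Cmod_triangle|]. lra. }
  assert (Hterm : forall z, Cmod (z - y) < d - Cmod (y - w0) -> forall m,
     is_derive (K:=C_AbsRing) (V:=C_NormedModule)
       (fun w => th k m * Cexp (expo g mu k m * w))%C z
       (th k m * expo g mu k m * Cexp (expo g mu k m * z))%C /\
     Cmod (th k m * expo g mu k m * Cexp (expo g mu k m * z))%C <= cst * coef_majorant r RR mu th k m).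
  { intros z Hz m. split; [apply is_derive_Cexp_linear|].
    destruct (Hdisc z (Hin z Hz)) as [H1 H2].
    apply (Cmod_dterm_le k m z s1 a b); auto. }
  assert (Hy0 : Cmod (y - y) < d - Cmod (y - w0))
    by (replace (y - y)%C with (RtoC 0) by ring; rewrite Cmod_0; lra).
  assert (Hsum : ex_series (fun m => cst * coef_majorant r RR mu th k m)) by now apply ex_series_Rmult_l.
  destruct (Cseries_dominated (fun m => th k m * expo g mu k m * Cexp (expo g mu k m * y))%C
              (fun m => cst * coef_majorant r RR mu th k m) (fun m => proj2 (Hterm y Hy0 m)) Hsum)
    as [HdP HdPb].
  split.
  - apply (is_derive_series (fun m w => th k m * Cexp (expo g mu k m * w))%C
             (fun m w => th k m * expo g mu k m * Cexp (expo g mu k m * w))%C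
             (Plog g mu th k) (fun m => cst * coef_majorant r RR mu th k m)
             y (d - Cmod (y - w0))); auto.
    + lra.
    + intros z Hz. destruct (Hdisc z (Hin z Hz)) as [H1 H2].
      apply (Plog_bound k z s1 a b); auto; lra.
  - now rewrite Series_scal_l in HdPb.
Qed.

Lemma is_derive_Glog :
  is_derive (K:=C_AbsRing) (V:=C_NormedModule) (Glog g mu th) w0
    (Cseries (fun k => dPlog g mu th k w0)).
Proof.
  assert (Hw0 : Cmod (w0 - w0) < d)
    by (replace (w0 - w0)%C with (RtoC 0) by ring; rewrite Cmod_0; lra).
  assert (Hsum : ex_series (fun k => cst * Series (coef_majorant r RR mu th k)))
    by now apply ex_series_Rmult_l.
  apply (is_derive_series (Plog g mu th) (dPlog g mu th) (Glog g mu th)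
           (fun k => cst * Series (coef_majorant r RR mu th k)) w0 d); auto.
  - intros k y Hy. now apply is_derive_Plog.
  - intros y Hy. destruct (Hdisc y Hy) as [H1 H2]. apply (is_series_Glog y s1 a b); auto; lra.
  - apply (Cseries_dominated _ (fun k => cst * Series (coef_majorant r RR mu th k))); auto.
    intros k. apply (is_derive_Plog k w0 Hw0).
Qed.
End Disc.
End LogCoordinates.

Lemma polarC_Cexp rho phi : 0 < rho -> polarC rho phi = Cexp (ln rho, phi).
Proof. intros H. unfold polarC, Cexp. simpl. now rewrite exp_ln. Qed.

Lemma xig_Cexp g rho phi : xig g rho phi = Cexp (Ci * RtoC g * (ln rho, phi))%C.
Proof.
  unfold xig, Cexp. simpl.
  apply injective_projections; simpl; f_equal; f_equal; ring.
Qed.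

Lemma Oeval_Plog RR g mu th k rho phi : 0 < rho -> 0 < RR -> - g * phi <= ln RR ->
  inO RR (th k) ->
  (Oeval (k * mu) (th k) (xig g rho phi) * Defs.Cpow (polarC rho phi) k)%C = Plog g mu th k (ln rho, phi).
Proof.
  intros Hrho HR Hphi Hex.
  set (w := (ln rho, phi) : C).
  set (u := (Ci * RtoC g * w)%C).
  unfold Oeval. rewrite xig_Cexp, polarC_Cexp by auto. fold w u. rewrite !Cpow_Cexp, <- Cexp_opp.
  set (a := fun m => (th k m * Cexp (RtoC (INR m) * u))%C).
  assert (Ea : (fun m => (th k m * Defs.Cpow (Cexp u) m)%C) = a).
  { apply functional_extensionality. intros m. unfold a. now rewrite Cpow_Cexp. }
  rewrite Ea.
  assert (Hb : forall m, Cmod (a m) <= Cmod (th k m) * RR ^ m).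
  { intros m. unfold a. rewrite Cmod_mult. apply Rmult_le_compat_l; [apply Cmod_ge_0|].
    rewrite Cmod_Cexp.
    replace (fst (RtoC (INR m) * u)%C) with (INR m * (- g * phi)) by (unfold u, w; simpl; ring).
    rewrite <- (exp_ln RR) at 1 by auto. rewrite <- exp_INR_mult. apply exp_le_mono.
    pose proof (pos_INR m). nra. }
  destruct (Cseries_dominated a _ Hb Hex) as [Ha _].
  set (c := (Cexp (- (RtoC (INR (k * mu)) * u)) * Cexp (RtoC (INR k) * w))%C).
  assert (Hpt : forall m, (th k m * Cexp (expo g mu k m * w))%C = (c * a m)%C).
  { intros m. unfold c, a.
    replace (Cexp (- (RtoC (INR (k * mu)) * u)) * Cexp (RtoC (INR k) * w) *
             (th k m * Cexp (RtoC (INR m) * u)))%C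
      with (th k m * (Cexp (- (RtoC (INR (k * mu)) * u)) * Cexp (RtoC (INR k) * w) *
                      Cexp (RtoC (INR m) * u)))%C by ring.
    rewrite <- !Cexp_plus. f_equal. f_equal. unfold expo, u. rewrite RtoC_mult, RtoC_minus. ring. }
  unfold Plog. symmetry. apply Cseries_unique.
  - eapply is_series_ext; [intros m; symmetry; apply Hpt|].
    replace (Cexp (- (RtoC (INR (k * mu)) * u)) * Cseries a * Cexp (RtoC (INR k) * w))%C
      with (c * Cseries a)%C by (unfold c; ring).
    exact (is_series_scal_l (K:=C_AbsRing) (V:=C_NormedModule) c a _ Ha).
  - apply (ex_series_le_nonneg _ (fun m => Cmod c * (Cmod (th k m) * RR ^ m))).
    + intros m. rewrite Hpt, Cmod_mult. split; [apply Rmult_le_pos; apply Cmod_ge_0|].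
      apply Rmult_le_compat_l; [apply Cmod_ge_0 | apply Hb].
    + now apply ex_series_Rmult_l.
Qed.

Lemma Hpartial_Plog RR g mu th m rho phi : 0 < rho -> 0 < RR -> - g * phi <= ln RR ->
  (forall k, inO RR (th k)) ->
  Hpartial g mu th m rho phi = sum_n (fun k => Plog g mu th k (ln rho, phi)) m.
Proof. intros. apply sum_n_ext. intros k. now apply (Oeval_Plog RR). Qed.

Lemma inH0_coef_majorant r RR g N mu th : 0 < r -> 0 < RR -> inH r RR g N mu 0 th ->
  (forall k, inO RR (th k)) /\ (forall k, ex_series (coef_majorant r RR mu th k)) /\
  is_series (fun k => Series (coef_majorant r RR mu th k)) (Hnorm r RR g N mu 0 th).
Proof.
  intros Hr HR HH. pose proof (inH_inO r RR g N mu 0 th HH) as HO. simpl in HO.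
  assert (Hext : forall k m, / r ^ (k * mu) * (Cmod (th k m) * RR ^ m) = coef_majorant r RR mu th k m)
    by (intros k m; symmetry; now apply (coef_majorant_eq r RR mu th k m)).
  assert (Hk : forall k, ex_series (coef_majorant r RR mu th k))
    by (intros k; eapply ex_series_ext; [apply Hext|]; apply ex_series_Rmult_l, HO).
  assert (HS : forall k, Series (coef_majorant r RR mu th k) = Hterm r RR g N mu 0 th k).
  { intros k. rewrite <- (Series_ext _ _ (Hext k)), Series_scal_l. reflexivity. }
  repeat split; auto.
  eapply is_series_ext; [intros k; symmetry; apply HS|]. apply Series_correct, HH.
Qed.

Lemma log_strip_of_sector r RR gamma alpha beta : gamma <> 0 ->
  (0 < gamma -> - ln RR / gamma <= alpha /\ beta <= - ln r / gamma) ->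
  (gamma < 0 -> - ln r / gamma <= alpha /\ beta <= - ln RR / gamma) ->
  forall phi, alpha < phi < beta -> ln r < - gamma * phi < ln RR.
Proof.
  intros hg Hp Hn phi [H1 H2].
  destruct (Rlt_or_le 0 gamma) as [Hg|Hg].
  - destruct (Hp Hg) as [Ha Hb].
    assert (A : - ln RR / gamma * gamma < phi * gamma) by (apply Rmult_lt_compat_r; lra).
    assert (B : phi * gamma < - ln r / gamma * gamma) by (apply Rmult_lt_compat_r; lra).
    replace (- ln RR / gamma * gamma) with (- ln RR) in A by (field; lra).
    replace (- ln r / gamma * gamma) with (- ln r) in B by (field; lra). lra.
  - destruct (Hn ltac:(lra)) as [Ha Hb].
    assert (A : - ln r / gamma * (- gamma) < phi * (- gamma)) by (apply Rmult_lt_compat_r; lra).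
    assert (B : phi * (- gamma) < - ln RR / gamma * (- gamma)) by (apply Rmult_lt_compat_r; lra).
    replace (- ln r / gamma * (- gamma)) with (ln r) in A by (field; lra).
    replace (- ln RR / gamma * (- gamma)) with (ln RR) in B by (field; lra). lra.
Qed.

Lemma disc_in_open_strip alpha beta w0 : fst w0 < 0 -> alpha < snd w0 < beta ->
  exists e, 0 < e /\ forall w, Cmod (w - w0) < e -> fst w < 0 /\ alpha < snd w < beta.
Proof.
  intros H1 H2.
  exists (Rmin (- fst w0) (Rmin (snd w0 - alpha) (beta - snd w0))).
  split; [repeat apply Rmin_pos; lra|].
  intros w Hw. pose proof (re_le_Cmod (w - w0)%C). pose proof (im_le_Cmod (w - w0)%C).
  pose proof (Rmin_l (- fst w0) (Rmin (snd w0 - alpha) (beta - snd w0))).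
  pose proof (Rmin_r (- fst w0) (Rmin (snd w0 - alpha) (beta - snd w0))).
  pose proof (Rmin_l (snd w0 - alpha) (beta - snd w0)).
  pose proof (Rmin_r (snd w0 - alpha) (beta - snd w0)).
  destruct w as [a b], w0 as [a0 b0]. simpl in *.
  assert (Ha : Rabs (a + - a0) < - a0) by (change (Re ((a, b) - (a0, b0))%C) with (a + - a0) in *; lra).
  assert (Hb : Rabs (b + - b0) < Rmin (b0 - alpha) (beta - b0)) by lra.
  apply Rabs_def2 in Ha. apply Rabs_def2 in Hb. split; lra.
Qed.

Lemma disc_in_log_strip g lr lR w0 : g <> 0 -> fst w0 < 0 -> lr < - g * snd w0 < lR ->
  exists d s1 a b, 0 < d /\ s1 < 0 /\ lr <= a /\ b < lR /\
    forall y, Cmod (y - w0) < d -> fst y <= s1 /\ a <= - g * snd y <= b.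
Proof.
  intros Hg H1 [H2 H3].
  set (l0 := - g * snd w0) in *.
  set (eta := Rmin (l0 - lr) (lR - l0) / 2).
  assert (Heta : 0 < eta) by (unfold eta; apply Rdiv_lt_0_compat; [apply Rmin_pos|]; lra).
  assert (Heta1 : eta <= (l0 - lr) / 2) by (unfold eta; pose proof (Rmin_l (l0 - lr) (lR - l0)); lra).
  assert (Heta2 : eta <= (lR - l0) / 2) by (unfold eta; pose proof (Rmin_r (l0 - lr) (lR - l0)); lra).
  assert (Hga : 0 < Rabs g) by (apply Rabs_pos_lt; auto).
  set (d := Rmin (- fst w0 / 2) (eta / Rabs g)).
  exists d, (fst w0 / 2), (l0 - eta), (l0 + eta).
  split; [unfold d; apply Rmin_pos; [lra | apply Rdiv_lt_0_compat; lra]|].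
  do 3 (split; [lra|]). intros y Hy.
  pose proof (Rmin_l (- fst w0 / 2) (eta / Rabs g)). pose proof (Rmin_r (- fst w0 / 2) (eta / Rabs g)).
  assert (Hre : Rabs (fst y - fst w0) < - fst w0 / 2).
  { replace (fst y - fst w0) with (Re (y - w0)%C) by (simpl; ring).
    eapply Rle_lt_trans; [apply re_le_Cmod|]. unfold d in Hy; lra. }
  assert (Him : Rabs (- g * snd y - l0) <= eta).
  { unfold l0. replace (- g * snd y - - g * snd w0) with (- g * snd (y - w0)%C) by (simpl; ring).
    rewrite Rabs_mult, Rabs_Ropp.
    assert (Rabs (snd (y - w0)%C) < eta / Rabs g)
      by (eapply Rle_lt_trans; [apply im_le_Cmod|]; unfold d in Hy; lra).
    apply Rmult_le_reg_r with (/ Rabs g); [apply Rinv_0_lt_compat; lra|].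
    replace (Rabs g * Rabs (snd (y - w0)%C) * / Rabs g) with (Rabs (snd (y - w0)%C)) by (field; lra).
    lra. }
  apply Rabs_def2 in Hre.
  pose proof (Rle_abs (- g * snd y - l0)). pose proof (Rabs_maj2 (- g * snd y - l0)).
  split; lra.
Qed.

Lemma Glog_tail_le r RR g mu th w m :
  (forall k, ex_series (coef_majorant r RR mu th k)) ->
  ex_series (fun k => Series (coef_majorant r RR mu th k)) ->
  fst w <= 0 -> ln r <= - g * snd w <= ln RR ->
  Cmod (Glog g mu th w - sum_n (fun k => Plog g mu th k w) m) <=
  Series (fun k => Series (coef_majorant r RR mu th k)) -
  sum_n (fun k => Series (coef_majorant r RR mu th k)) m.
Proof.
  intros Hmaj Hsum H1 H2.
  apply Cseries_tail_le; [| |now apply Series_correct].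
  - apply (is_series_Glog r RR g mu th Hmaj Hsum w 0 (ln r) (ln RR)); lra.
  - intros k. apply (Plog_bound r RR g mu th Hmaj k w 0 (ln r) (ln RR)); lra.
Qed.

Lemma inH0_holomorphic_on_sector r RR gamma N mu alpha beta theta :
  0 < r -> r < RR -> gamma <> 0 -> beta - alpha < 2 * PI ->
  (0 < gamma -> - ln RR / gamma <= alpha /\ beta <= - ln r / gamma) ->
  (gamma < 0 -> - ln r / gamma <= alpha /\ beta <= - ln RR / gamma) ->
  inH r RR gamma N mu 0 theta ->
  exists F : C -> C,
    (forall x, in_sector alpha beta x -> @ex_derive C_AbsRing C_NormedModule F x) /\
    (forall eps, 0 < eps -> exists K : nat, forall m : nat, (K <= m)%nat ->
       forall rho phi, 0 < rho < 1 -> alpha < phi < beta ->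
       Cmod (Cminus (Hpartial gamma mu theta m rho phi) (F (polarC rho phi))) < eps).
Proof.
  intros Hr HrR Hg H2pi Hgp Hgn HH.
  assert (HR : 0 < RR) by lra.
  destruct (inH0_coef_majorant r RR gamma N mu theta Hr HR HH) as [HO [Hmaj Hsum]].
  pose proof (ex_intro _ _ Hsum) as Hsum'.
  pose proof (log_strip_of_sector r RR gamma alpha beta Hg Hgp Hgn) as Hstrip.
  set (P := fun w : C => fst w < 0 /\ alpha < snd w < beta).
  destruct (Cexp_factor P (Glog gamma mu theta)) as [F HF].
  { intros w w' Hw Hw'. apply (Cexp_inj_strip alpha beta); [lra | apply Hw | apply Hw']. }
  assert (Hln : forall rho, 0 < rho < 1 -> ln rho < 0)
    by (intros rho Hrho; rewrite <- ln_1; apply ln_increasing; lra).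
  exists F. split.
  - intros x [rho [phi [Hrho [Hphi ->]]]]. rewrite polarC_Cexp by lra.
    destruct (disc_in_log_strip gamma (ln r) (ln RR) (ln rho, phi)) as [d [s1 [a [b Hdisc]]]];
      [auto | simpl; auto | simpl; auto|].
    destruct Hdisc as [Hd [Hs1 [Ha [Hb Hdisc]]]].
    eapply (ex_derive_Cexp_factor _ F P); [| exact HF |].
    + apply disc_in_open_strip; simpl; auto.
    + exact (is_derive_Glog r RR gamma mu theta Hmaj Hsum' _ d s1 a b Hd Hs1 Ha Hb Hdisc).
  - intros eps Heps.
    destruct (proj1 (filterlim_R_eps _ _) Hsum eps Heps) as [K HK].
    exists K. intros m Hm rho phi Hrho Hphi.
    assert (Htail : Rabs (sum_n (fun k => Series (coef_majorant r RR mu theta k)) m -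
                          Hnorm r RR gamma N mu 0 theta) < eps) by exact (HK m Hm).
    destruct (Hstrip phi Hphi) as [Hs1 Hs2].
    rewrite polarC_Cexp, HF, (Hpartial_Plog RR) by (unfold P; simpl; auto; lra).
    rewrite <- Cmod_opp.
    replace (- Cminus _ _)%C with (Glog gamma mu theta (ln rho, phi) -
                                   sum_n (fun k => Plog gamma mu theta k (ln rho, phi)) m)%C
      by (unfold Cminus; ring).
    eapply Rle_lt_trans; [apply Glog_tail_le; simpl; auto; pose proof (Hln rho Hrho); lra|].
    rewrite (is_series_unique _ _ Hsum). apply Rabs_def2 in Htail. lra.
Qed.

Theorem lemma6 (r RR gamma : R) (N mu n : nat)
  (hr : 0 < r) (hrR : r < RR) (hgamma : gamma <> 0)
  (hmu : (1 <= mu)%nat) (hn : (1 <= n)%nat) :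
  (* (i) nested inclusions and monotonicity of the norms *)
  (forall j theta, (1 <= j <= n)%nat ->
     inH r RR gamma N mu j theta ->
     inH r RR gamma N mu (j - 1) theta /\
     Hnorm r RR gamma N mu (j - 1) theta <= Hnorm r RR gamma N mu j theta) /\
  (* (i) H^0 is contained in O(S_1) for every admissible sector S_1 *)
  (forall alpha beta : R,
     alpha < beta -> beta - alpha < 2 * PI ->
     (0 < gamma -> - ln RR / gamma <= alpha /\ beta <= - ln r / gamma) ->
     (gamma < 0 -> - ln r / gamma <= alpha /\ beta <= - ln RR / gamma) ->
     forall theta, inH r RR gamma N mu 0 theta ->
     exists F : C -> C,
       (forall x, in_sector alpha beta x ->
          @ex_derive C_AbsRing C_NormedModule F x) /\
       (forall eps, 0 < eps -> exists K : nat, forall m : nat, (K <= m)%nat ->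
          forall rho phi, 0 < rho < 1 -> alpha < phi < beta ->
          Cmod (Cminus (Hpartial gamma mu theta m rho phi) (F (polarC rho phi)))
            < eps)) /\
  (* (ii) H^0 is a Banach-algebra-like: closed under product, submultiplicative *)
  (forall theta1 theta2,
     inH r RR gamma N mu 0 theta1 -> inH r RR gamma N mu 0 theta2 ->
     inH r RR gamma N mu 0 (Hmul theta1 theta2) /\
     Hnorm r RR gamma N mu 0 (Hmul theta1 theta2)
       <= Hnorm r RR gamma N mu 0 theta1 * Hnorm r RR gamma N mu 0 theta2) /\
  (* (iii) delta maps H^j to H^{j-1} continuously *)
  (forall j, (1 <= j <= n)%nat ->
     (forall theta, inH r RR gamma N mu j theta ->
        inH r RR gamma N mu (j - 1) (Hdelta gamma mu theta)) /\
     (forall theta0, inH r RR gamma N mu j theta0 ->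
        forall eps, 0 < eps -> exists eta, 0 < eta /\
        forall theta, inH r RR gamma N mu j theta ->
          Hnorm r RR gamma N mu j (Hsub theta theta0) < eta ->
          Hnorm r RR gamma N mu (j - 1)
            (Hsub (Hdelta gamma mu theta) (Hdelta gamma mu theta0)) < eps)).
Proof.
  assert (HR : 0 < RR) by lra.
  split; [|split; [|split]].
  - intros j theta _. apply inH_le; auto; lia.
  - intros alpha beta _ H2pi Hgp Hgn theta.
    now apply (inH0_holomorphic_on_sector r RR gamma N mu alpha beta theta).
  - intros theta1 theta2. now apply inH_Hmul.
  - intros j Hj. split.
    + intros theta HH. apply inH_Hdelta; auto; lia.
    + intros theta0 HH0 eps Heps. exists eps. split; [exact Heps|].
      intros theta HH Hnorm_lt. rewrite Hdelta_Hsub.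
      destruct (inH_Hsub r RR gamma N mu hr HR j theta theta0 HH HH0) as [Hsub _].
      eapply Rle_lt_trans; [|exact Hnorm_lt].
      apply inH_Hdelta; auto; lia.
Qed.
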